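(* For every $a\geq 0$, the space $\mathcal{A}_a$ has the following properties: (i) the set of all polynomials is dense in $\mathcal{A}_a$; (ii) on every bounded subset $B\subset \mathcal{A}_a$, the relative topology induced by the topology $\mathcal{T}_a$ coincides with the relative topology of uniform convergence on compact subsets of $\mathbb{C}$; (iii) for every $b\geq 0$, every $f\in \mathcal{A}_a$ and every $g\in\mathcal{A}_b$, the product $fg$ belongs to $\mathcal{A}_{a+b}$.
   Context: Let $\mathcal{E}$ denote the set of all entire functions $\mathbb{C}\to\mathbb{C}$. For $b>0$ and $f\in\mathcal{E}$ put $\|f\|_b=\sup_{k\in\mathbb{N}_0} b^{-k}|f^{(k)}(0)|$, where $\mathbb{N}_0=\{0,1,2,\dots\}$. For $a\geq 0$ let $\mathcal{A}_a=\{f\in\mathcal{E}: \|f\|_b<\infty \text{ for all } b>a\}$, equipped with the locally convex topology $\mathcal{T}_a$ generated by the family of norms $\{\|\cdot\|_b: b>a\}$. A subset $B\subset\mathcal{A}_a$ is bounded in $\mathcal{A}_a$ if for every $b>a$ there is $C_b$ with $\sup_{f\in B}\|f\|_b\leq C_b$. *)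

(* C = Coquelicot complex numbers; derivatives
   of functions C -> C are taken over the absolute ring C_AbsRing, i.e. they
   are genuine complex derivatives. *)
From Stdlib Require Import Reals ClassicalEpsilon.
From Coquelicot Require Import Coquelicot.
Open Scope R_scope.

Definition entire (f : C -> C) : Prop :=
  forall z : C, @ex_derive C_AbsRing C_NormedModule f z.

(* the complex derivative (meaningful where it exists; chosen by epsilon) *)
Definition Cderiv (f : C -> C) : C -> C :=
  fun z => epsilon (inhabits (0%R, 0%R) : inhabited C)
             (fun l : C => @is_derive C_AbsRing C_NormedModule f z l).

Definition Cderiv_n (k : nat) (f : C -> C) : C -> C := Nat.iter k Cderiv f.

Definition normb (b : R) (f : C -> C) : Rbar :=
  Lub_Rbar (fun x : R => exists k : nat,
              x = Cmod (Cderiv_n k f (0%R, 0%R)) / b ^ k).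

Definition A_space (a : R) (f : C -> C) : Prop :=
  entire f /\ forall b : R, a < b -> Rbar_lt (normb b f) p_infty.

Definition Csub_fun (f g : C -> C) : C -> C := fun z => Cminus (f z) (g z).
Definition Cmul_fun (f g : C -> C) : C -> C := fun z => Cmult (f z) (g z).

Definition is_polynomial (p : C -> C) : Prop :=
  exists (n : nat) (c : nat -> C),
    forall z : C, p z = sum_n (fun k => Cmult (c k) (pow_n z k)) n.

(* basic T_a-neighbourhood condition: g lies in the finite intersection of
   the balls {g : ||g - f||_b < eps}, b in bs *)
Definition Ta_close (bs : list R) (eps : R) (f g : C -> C) : Prop :=
  List.Forall (fun b => Rbar_lt (normb b (Csub_fun g f)) (Finite eps)) bs.

Definition sup_disc (r : R) (h : C -> C) : Rbar :=
  Lub_Rbar (fun x : R => exists z : C, Cmod z <= r /\ x = Cmod (h z)).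

(* basic neighbourhood for uniform convergence on compact sets (discs are
   cofinal among compact subsets of C) *)
Definition cc_close (r eps : R) (f g : C -> C) : Prop :=
  Rbar_lt (sup_disc r (Csub_fun g f)) (Finite eps).

Definition bounded_in_A (a : R) (B : (C -> C) -> Prop) : Prop :=
  (forall f, B f -> A_space a f) /\
  forall b : R, a < b -> exists Cb : R, forall f, B f -> Rbar_le (normb b f) (Finite Cb).

(* Everything is read off the Taylor coefficients [f^(k)(0)], through Cauchy's
   integral formula on circles.  The formula is proved from scratch: Goursat's
   lemma (by quadrisection) kills the boundary integrals of rectangles, which
   yields a primitive and hence the vanishing of circle integrals; expanding the
   Cauchy kernel in a geometric series then gives the formula.  Differentiating
   it under the integral sign shows that entire functions have derivatives of
   all orders, gives the Cauchy estimates [|f^(k)(0)| <= k! sup_{|z|=r} |f| / r^k]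
   and the convergence of the Taylor series.

   For [a < b' < b] one has [|f^(k)(0)| / b^k <= ||f||_b' (b'/b)^k].  This
   geometric decay makes high-degree Taylor polynomials [T_a]-close to [f] (i),
   and on a bounded set it is uniform, so a [T_a]-neighbourhood is controlled by
   finitely many coefficients, which the Cauchy estimates bound by a sup over the
   unit circle; conversely [|h z| <= ||h||_b e^(b|z|)] (ii).  The Leibniz rule
   and the binomial theorem give [||fg||_(b+b') <= ||f||_b ||g||_b'] (iii). *)

From Stdlib Require Import Reals Lra Lia ClassicalEpsilon FunctionalExtensionality Factorial.
From Coquelicot Require Import Coquelicot.
Open Scope R_scope.

(** * Complex differentiability *)

Definition is_Cderive (f : C -> C) (z l : C) : Prop :=
  forall eps, 0 < eps -> exists del, 0 < del /\ forall w, Cmod (w - z) < del ->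
    Cmod (f w - f z - l * (w - z)) <= eps * Cmod (w - z).

Definition Ccont_at (f : C -> C) (z : C) : Prop :=
  forall eps, 0 < eps -> exists del, 0 < del /\ forall w, Cmod (w - z) < del ->
    Cmod (f w - f z) < eps.

Definition Ccont (f : C -> C) : Prop := forall z, Ccont_at f z.

Definition holomorphic (f : C -> C) : Prop := forall z, exists l, is_Cderive f z l.

Lemma Cmod_le_abs_sum (z : C) : Cmod z <= Rabs (fst z) + Rabs (snd z).
Proof.
  destruct z as [x y]; unfold Cmod; cbn [fst snd].
  rewrite <- (sqrt_Rsqr (Rabs x + Rabs y)) by (generalize (Rabs_pos x) (Rabs_pos y); lra).
  apply sqrt_le_1_alt. unfold Rsqr.
  generalize (Rabs_pos x) (Rabs_pos y); intros.
  rewrite <- (pow2_abs x), <- (pow2_abs y). nra.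
Qed.

Lemma im_le_Cmod (z : C) : Rabs (snd z) <= Cmod z.
Proof.
  destruct z as [x y]. unfold Cmod; simpl.
  rewrite <- sqrt_Rsqr_abs. apply sqrt_le_1_alt. unfold Rsqr. nra.
Qed.

Lemma Cmod_minus_sym (x y : C) : Cmod (x - y) = Cmod (y - x).
Proof. rewrite <- Cmod_opp. f_equal. ring. Qed.

Lemma Cmod_triangle_rev (x y : C) : Cmod x - Cmod y <= Cmod (x - y).
Proof.
  generalize (Cmod_triangle (x - y) y). replace (x - y + y)%C with x by ring. lra.
Qed.

Lemma Cmod_triangle_minus (x y : C) : Cmod (x - y) <= Cmod x + Cmod y.
Proof. unfold Cminus. rewrite <- (Cmod_opp y). apply Cmod_triangle. Qed.

Lemma Cmod_le_0 z : Cmod z <= 0 -> z = RtoC 0.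
Proof. intros H. apply Cmod_eq_0. generalize (Cmod_ge_0 z). lra. Qed.

(* Coquelicot has two uniform structures on [C]: the product one of
   [C_NormedModule], used by [entire] and [Cderiv], and the one of the absolute
   ring [C_AbsRing], for which it proves the algebraic derivation rules. *)
Lemma is_derive_is_Cderive (f : C -> C) z l :
  @is_derive C_AbsRing C_NormedModule f z l -> is_Cderive f z l.
Proof.
  intros [_ Hd] eps He.
  assert (Hl : is_filter_lim (@locally (AbsRing_UniformSpace C_AbsRing) z) z)
    by (intros P HP; exact HP).
  destruct (Hd z Hl (mkposreal eps He)) as [[del Hdel] Hd'].
  exists del; split; auto. intros w Hw. specialize (Hd' w Hw).
  replace (l * (w - z))%C with ((w - z) * l)%C by ring. exact Hd'.
Qed.

Lemma is_Cderive_is_derive (f : C -> C) z l :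
  is_Cderive f z l -> @is_derive C_AbsRing C_NormedModule f z l.
Proof.
  intros H. split; [apply is_linear_scal_l|].
  intros x Hx.
  apply (@is_filter_lim_locally_unique C_AbsRing (AbsRing_NormedModule C_AbsRing)) in Hx.
  subst x. intros [e He].
  destruct (H e He) as [del [Hdel Hd]]. exists (mkposreal del Hdel).
  intros w Hw. specialize (Hd w Hw).
  replace (l * (w - z))%C with ((w - z) * l)%C in Hd by ring. exact Hd.
Qed.

Lemma is_derive_abs_is_Cderive (f : C -> C) z l :
  @is_derive C_AbsRing (AbsRing_NormedModule C_AbsRing) f z l -> is_Cderive f z l.
Proof.
  intros [_ Hd] eps He.
  assert (Hl : is_filter_lim (@locally (AbsRing_UniformSpace C_AbsRing) z) z)
    by (intros P HP; exact HP).
  destruct (Hd z Hl (mkposreal eps He)) as [[del Hdel] Hd'].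
  exists del; split; auto. intros w Hw. specialize (Hd' w Hw).
  replace (l * (w - z))%C with ((w - z) * l)%C by ring. exact Hd'.
Qed.

Lemma is_Cderive_is_derive_abs (f : C -> C) z l :
  is_Cderive f z l -> @is_derive C_AbsRing (AbsRing_NormedModule C_AbsRing) f z l.
Proof.
  intros H. split; [apply is_linear_scal_l|].
  intros x Hx.
  apply (@is_filter_lim_locally_unique C_AbsRing (AbsRing_NormedModule C_AbsRing)) in Hx.
  subst x. intros [e He].
  destruct (H e He) as [del [Hdel Hd]]. exists (mkposreal del Hdel).
  intros w Hw. specialize (Hd w Hw).
  replace (l * (w - z))%C with ((w - z) * l)%C in Hd by ring. exact Hd.
Qed.

Lemma entire_holomorphic f : entire f <-> holomorphic f.
Proof.
  split; intros H z; destruct (H z) as [l Hl]; exists l.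
  - now apply is_derive_is_Cderive.
  - now apply is_Cderive_is_derive.
Qed.

Lemma is_Cderive_const (c z : C) : is_Cderive (fun _ => c) z 0.
Proof.
  apply is_derive_abs_is_Cderive.
  apply (@is_derive_const C_AbsRing (AbsRing_NormedModule C_AbsRing)).
Qed.

Lemma is_Cderive_id (z : C) : is_Cderive (fun w => w) z 1.
Proof. apply is_derive_abs_is_Cderive. apply (@is_derive_id C_AbsRing). Qed.

Lemma is_Cderive_plus f g z a b :
  is_Cderive f z a -> is_Cderive g z b -> is_Cderive (fun w => f w + g w)%C z (a + b)%C.
Proof.
  intros H1 H2. apply is_derive_abs_is_Cderive.
  apply (@is_derive_plus C_AbsRing (AbsRing_NormedModule C_AbsRing));
    now apply is_Cderive_is_derive_abs.
Qed.

Lemma is_Cderive_minus f g z a b :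
  is_Cderive f z a -> is_Cderive g z b -> is_Cderive (fun w => f w - g w)%C z (a - b)%C.
Proof.
  intros H1 H2. apply is_derive_abs_is_Cderive.
  apply (@is_derive_minus C_AbsRing (AbsRing_NormedModule C_AbsRing));
    now apply is_Cderive_is_derive_abs.
Qed.

Lemma is_Cderive_mult f g z a b :
  is_Cderive f z a -> is_Cderive g z b ->
  is_Cderive (fun w => f w * g w)%C z (a * g z + f z * b)%C.
Proof.
  intros H1 H2. apply is_derive_abs_is_Cderive.
  apply (@is_derive_mult C_AbsRing); try now apply is_Cderive_is_derive_abs.
  intros; apply Cmult_comm.
Qed.

Lemma is_Cderive_comp f g z a b :
  is_Cderive f (g z) a -> is_Cderive g z b -> is_Cderive (fun w => f (g w)) z (b * a)%C.
Proof.
  intros H1 H2. apply is_derive_abs_is_Cderive.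
  apply (@is_derive_comp C_AbsRing (AbsRing_NormedModule C_AbsRing));
    now apply is_Cderive_is_derive_abs.
Qed.

Lemma is_Cderive_scal c f z a :
  is_Cderive f z a -> is_Cderive (fun w => c * f w)%C z (c * a)%C.
Proof.
  intros H. replace (c * a)%C with (0 * f z + c * a)%C by ring.
  exact (is_Cderive_mult (fun _ => c) f z 0 a (is_Cderive_const c z) H).
Qed.

Lemma is_Cderive_pow n u :
  is_Cderive (fun w => w ^ n)%C u (RtoC (INR n) * u ^ (pred n))%C.
Proof.
  induction n.
  - simpl. replace (RtoC 0 * 1)%C with (RtoC 0) by ring. apply is_Cderive_const.
  - replace (RtoC (INR (S n)) * u ^ pred (S n))%C
      with (1 * u ^ n + u * (RtoC (INR n) * u ^ pred n))%C.
    + exact (is_Cderive_mult _ _ u _ _ (is_Cderive_id u) IHn).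
    + rewrite S_INR, RtoC_plus. destruct n; simpl; ring.
Qed.

Lemma is_Cderive_inv (u : C) :
  u <> RtoC 0 -> is_Cderive (fun w => / w)%C u (- / (u * u))%C.
Proof.
  intros Hu eps He.
  assert (Hm : 0 < Cmod u) by (apply Cmod_gt_0 in Hu; auto).
  set (m3 := Cmod u * Cmod u * Cmod u).
  assert (Hm3 : 0 < m3) by (unfold m3; repeat apply Rmult_lt_0_compat; auto).
  exists (Rmin (Cmod u / 2) (eps * m3 / 2)). split.
  { apply Rmin_pos; [lra|]. apply Rdiv_lt_0_compat; [|lra]. apply Rmult_lt_0_compat; auto. }
  intros w Hw.
  assert (H1 : Cmod (w - u) < Cmod u / 2) by (eapply Rlt_le_trans; [apply Hw|apply Rmin_l]).
  assert (H2 : Cmod (w - u) < eps * m3 / 2) by (eapply Rlt_le_trans; [apply Hw|apply Rmin_r]).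
  assert (Hw1 : Cmod u / 2 <= Cmod w).
  { generalize (Cmod_triangle_rev u w). rewrite Cmod_minus_sym. lra. }
  assert (Hw0 : w <> RtoC 0) by (intro E; subst; rewrite Cmod_0 in Hw1; lra).
  replace (/ w - / u - - / (u * u) * (w - u))%C with ((w - u) * (w - u) / (w * (u * u)))%C
    by (field; split; auto).
  unfold Cdiv. rewrite !Cmod_mult, Cmod_inv, !Cmod_mult by (repeat apply Cmult_neq_0; auto).
  set (m := Cmod (w - u)) in *.
  assert (0 <= m) by apply Cmod_ge_0.
  apply Rle_trans with (m * m * / (Cmod u / 2 * (Cmod u * Cmod u))).
  - apply Rmult_le_compat_l; [nra|]. apply Rinv_le_contravar.
    + apply Rmult_lt_0_compat; nra.
    + apply Rmult_le_compat_r; nra.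
  - replace (m * m * / (Cmod u / 2 * (Cmod u * Cmod u))) with (m * (2 * m / m3))
      by (unfold m3; field; lra).
    rewrite (Rmult_comm eps m). apply Rmult_le_compat_l; auto.
    replace eps with (eps * m3 * / m3) by (field; lra). unfold Rdiv.
    apply Rmult_le_compat_r; [left; apply Rinv_0_lt_compat; auto|lra].
Qed.

Lemma is_Cderive_ext_loc f g z a r :
  0 < r -> (forall w, Cmod (w - z) < r -> f w = g w) -> is_Cderive f z a -> is_Cderive g z a.
Proof.
  intros Hr E H eps He. destruct (H eps He) as [d [Hd H']].
  exists (Rmin d r); split; [apply Rmin_pos; auto|].
  intros w Hw.
  assert (Cmod (w - z) < d) by (eapply Rlt_le_trans; [apply Hw|apply Rmin_l]).
  assert (Cmod (w - z) < r) by (eapply Rlt_le_trans; [apply Hw|apply Rmin_r]).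
  rewrite <- !E; auto. replace (z - z)%C with (RtoC 0) by ring. rewrite Cmod_0; auto.
Qed.

Lemma is_Cderive_uniq f z a b : is_Cderive f z a -> is_Cderive f z b -> a = b.
Proof.
  intros Ha Hb.
  destruct (Req_dec (Cmod (a - b)) 0) as [E|E].
  { apply Cmod_eq_0 in E. apply Ceq_minus in E; auto. }
  exfalso. assert (Hp : 0 < Cmod (a - b)) by (generalize (Cmod_ge_0 (a - b)); lra).
  set (e := Cmod (a - b) / 4).
  destruct (Ha e ltac:(unfold e; lra)) as [d1 [Hd1 H1]].
  destruct (Hb e ltac:(unfold e; lra)) as [d2 [Hd2 H2]].
  set (h := Rmin d1 d2 / 2).
  assert (Hh : 0 < h) by (unfold h; generalize (Rmin_pos _ _ Hd1 Hd2); lra).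
  assert (Hh1 : Cmod ((z + RtoC h) - z) = h).
  { replace (z + RtoC h - z)%C with (RtoC h) by ring. rewrite Cmod_R. apply Rabs_pos_eq; lra. }
  assert (Hlt1 : h < d1) by (unfold h; generalize (Rmin_l d1 d2); lra).
  assert (Hlt2 : h < d2) by (unfold h; generalize (Rmin_r d1 d2); lra).
  specialize (H1 (z + RtoC h)%C ltac:(rewrite Hh1; lra)).
  specialize (H2 (z + RtoC h)%C ltac:(rewrite Hh1; lra)).
  rewrite Hh1 in H1, H2.
  set (w := (z + RtoC h)%C) in *.
  assert (Cmod ((a - b) * (w - z)) <= 2 * e * h).
  { replace ((a - b) * (w - z))%C
      with ((f w - f z - b * (w - z)) - (f w - f z - a * (w - z)))%C by ring.
    eapply Rle_trans; [apply Cmod_triangle_minus|lra]. }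
  rewrite Cmod_mult, Hh1 in H. unfold e in H. nra.
Qed.

Lemma Cderiv_unique f z l : is_Cderive f z l -> Cderiv f z = l.
Proof.
  intros H. unfold Cderiv.
  assert (Hex : exists l, @is_derive C_AbsRing C_NormedModule f z l)
    by (exists l; now apply is_Cderive_is_derive).
  apply (is_Cderive_uniq f z); [|exact H].
  apply is_derive_is_Cderive. exact (epsilon_spec _ _ Hex).
Qed.

Lemma holomorphic_is_Cderive f z : holomorphic f -> is_Cderive f z (Cderiv f z).
Proof. intros H. destruct (H z) as [l Hl]. now rewrite (Cderiv_unique f z l Hl). Qed.

Lemma is_Cderive_cont_at f z l : is_Cderive f z l -> Ccont_at f z.
Proof.
  intros H eps He.
  destruct (H 1 Rlt_0_1) as [d [Hd H1]].
  assert (Hl : 0 <= Cmod l) by apply Cmod_ge_0.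
  exists (Rmin d (eps / (Cmod l + 2))). split.
  { apply Rmin_pos; auto. apply Rdiv_lt_0_compat; lra. }
  intros w Hw.
  assert (Hw1 : Cmod (w - z) < d) by (eapply Rlt_le_trans; [apply Hw|apply Rmin_l]).
  assert (Hw2 : Cmod (w - z) < eps / (Cmod l + 2)) by (eapply Rlt_le_trans; [apply Hw|apply Rmin_r]).
  specialize (H1 w Hw1).
  replace (f w - f z)%C with ((f w - f z - l * (w - z)) + l * (w - z))%C by ring.
  eapply Rle_lt_trans; [apply Cmod_triangle|]. rewrite Cmod_mult.
  assert (0 <= Cmod (w - z)) by apply Cmod_ge_0.
  apply (Rmult_lt_compat_l (Cmod l + 2)) in Hw2; [|lra].
  replace ((Cmod l + 2) * (eps / (Cmod l + 2))) with eps in Hw2 by (field; lra). nra.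
Qed.

Lemma holomorphic_Ccont f : holomorphic f -> Ccont f.
Proof. intros H z. destruct (H z) as [l Hl]. eapply is_Cderive_cont_at; eauto. Qed.

Lemma holomorphic_minus f g : holomorphic f -> holomorphic g -> holomorphic (Csub_fun g f).
Proof.
  intros Hf Hg z. destruct (Hf z) as [a Ha], (Hg z) as [b Hb].
  eexists. unfold Csub_fun. apply is_Cderive_minus; eauto.
Qed.

Lemma holomorphic_mult f g : holomorphic f -> holomorphic g -> holomorphic (Cmul_fun f g).
Proof.
  intros Hf Hg z. destruct (Hf z) as [a Ha], (Hg z) as [b Hb].
  eexists. unfold Cmul_fun. apply is_Cderive_mult; eauto.
Qed.

(** * Paths and integrals of complex-valued functions on an interval *)

Definition is_Rderive (f : R -> C) (t : R) (l : C) : Prop :=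
  forall eps, 0 < eps -> exists del, 0 < del /\ forall s, Rabs (s - t) < del ->
    Cmod (f s - f t - RtoC (s - t) * l) <= eps * Rabs (s - t).

Definition Rcont_at (f : R -> C) (t : R) : Prop :=
  forall eps, 0 < eps -> exists del, 0 < del /\ forall s, Rabs (s - t) < del ->
    Cmod (f s - f t) < eps.

Definition Rcont (f : R -> C) : Prop := forall t, Rcont_at f t.

Lemma is_Rderive_cont_at f t l : is_Rderive f t l -> Rcont_at f t.
Proof.
  intros H eps He.
  destruct (H 1 Rlt_0_1) as [d [Hd H1]].
  assert (Hl : 0 <= Cmod l) by apply Cmod_ge_0.
  exists (Rmin d (eps / (Cmod l + 2))). split.
  { apply Rmin_pos; auto. apply Rdiv_lt_0_compat; lra. }
  intros s Hs.
  assert (Hs1 : Rabs (s - t) < d) by (eapply Rlt_le_trans; [apply Hs|apply Rmin_l]).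
  assert (Hs2 : Rabs (s - t) < eps / (Cmod l + 2)) by (eapply Rlt_le_trans; [apply Hs|apply Rmin_r]).
  specialize (H1 s Hs1).
  replace (f s - f t)%C with ((f s - f t - RtoC (s - t) * l) + RtoC (s - t) * l)%C by ring.
  eapply Rle_lt_trans; [apply Cmod_triangle|]. rewrite Cmod_mult, Cmod_R.
  assert (0 <= Rabs (s - t)) by apply Rabs_pos.
  apply (Rmult_lt_compat_l (Cmod l + 2)) in Hs2; [|lra].
  replace ((Cmod l + 2) * (eps / (Cmod l + 2))) with eps in Hs2 by (field; lra). nra.
Qed.

Lemma is_Rderive_comp (F : C -> C) (w : R -> C) t a b :
  is_Cderive F (w t) a -> is_Rderive w t b -> is_Rderive (fun s => F (w s)) t (a * b)%C.
Proof.
  intros HF Hw eps He.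
  set (K := Cmod b + 1). assert (HK : 0 < K) by (unfold K; generalize (Cmod_ge_0 b); lra).
  set (A := Cmod a + 1). assert (HA : 0 < A) by (unfold A; generalize (Cmod_ge_0 a); lra).
  destruct (HF (eps / (2 * K)) ltac:(apply Rdiv_lt_0_compat; lra)) as [d1 [Hd1 H1]].
  destruct (Hw 1 Rlt_0_1) as [d2 [Hd2 H2]].
  destruct (Hw (eps / (2 * A)) ltac:(apply Rdiv_lt_0_compat; lra)) as [d3 [Hd3 H3]].
  exists (Rmin (Rmin d2 d3) (d1 / K)). split.
  { repeat apply Rmin_pos; auto. apply Rdiv_lt_0_compat; auto. }
  intros s Hs.
  generalize (Rmin_l (Rmin d2 d3) (d1 / K)) (Rmin_r (Rmin d2 d3) (d1 / K))
    (Rmin_l d2 d3) (Rmin_r d2 d3); intros.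
  specialize (H2 s ltac:(lra)). specialize (H3 s ltac:(lra)).
  assert (Hws : Cmod (w s - w t) <= K * Rabs (s - t)).
  { replace (w s - w t)%C with ((w s - w t - RtoC (s - t) * b) + RtoC (s - t) * b)%C by ring.
    eapply Rle_trans; [apply Cmod_triangle|]. rewrite Cmod_mult, Cmod_R. unfold K. lra. }
  assert (Hws1 : Cmod (w s - w t) < d1).
  { assert (Hs1 : Rabs (s - t) < d1 / K) by lra.
    apply (Rmult_lt_compat_l K) in Hs1; auto.
    replace (K * (d1 / K)) with d1 in Hs1 by (field; lra). lra. }
  specialize (H1 (w s) Hws1).
  replace (F (w s) - F (w t) - RtoC (s - t) * (a * b))%C with
    ((F (w s) - F (w t) - a * (w s - w t)) + a * (w s - w t - RtoC (s - t) * b))%C by ring.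
  eapply Rle_trans; [apply Cmod_triangle|]. rewrite Cmod_mult.
  assert (E1 : eps / (2 * K) * Cmod (w s - w t) <= eps / 2 * Rabs (s - t)).
  { apply Rle_trans with (eps / (2 * K) * (K * Rabs (s - t))).
    - apply Rmult_le_compat_l; auto. left; apply Rdiv_lt_0_compat; lra.
    - right; field; lra. }
  assert (E2 : Cmod a * Cmod (w s - w t - RtoC (s - t) * b) <= eps / 2 * Rabs (s - t)).
  { apply Rle_trans with (A * (eps / (2 * A) * Rabs (s - t))).
    - apply Rmult_le_compat; auto using Cmod_ge_0. unfold A; lra.
    - right; field; lra. }
  lra.
Qed.

Lemma derivable_pt_lim_bound g t L : derivable_pt_lim g t L ->
  forall eps, 0 < eps -> exists d, 0 < d /\ forall s, Rabs (s - t) < d ->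
    Rabs (g s - g t - (s - t) * L) <= eps * Rabs (s - t).
Proof.
  intros H eps He. destruct (H eps He) as [[d Hd] H1]. exists d; split; auto.
  intros s Hs. destruct (Req_dec s t) as [E|E].
  { subst. replace (g t - g t - (t - t) * L) with 0 by ring. rewrite Rminus_diag, !Rabs_R0. lra. }
  specialize (H1 (s - t) ltac:(lra) Hs). replace (t + (s - t)) with s in H1 by ring.
  replace (g s - g t - (s - t) * L) with ((s - t) * ((g s - g t) / (s - t) - L)) by (field; lra).
  rewrite Rabs_mult, Rmult_comm. apply Rmult_le_compat_r; [apply Rabs_pos|lra].
Qed.

Lemma is_Rderive_pair (f : R -> C) t (l : C) :
  derivable_pt_lim (fun s => fst (f s)) t (fst l) ->
  derivable_pt_lim (fun s => snd (f s)) t (snd l) -> is_Rderive f t l.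
Proof.
  intros H1 H2 eps He.
  destruct (derivable_pt_lim_bound _ _ _ H1 (eps/2) ltac:(lra)) as [d1 [Hd1 G1]].
  destruct (derivable_pt_lim_bound _ _ _ H2 (eps/2) ltac:(lra)) as [d2 [Hd2 G2]].
  exists (Rmin d1 d2); split; [apply Rmin_pos; auto|].
  intros s Hs. specialize (G1 s ltac:(eapply Rlt_le_trans; [apply Hs|apply Rmin_l])).
  specialize (G2 s ltac:(eapply Rlt_le_trans; [apply Hs|apply Rmin_r])).
  eapply Rle_trans; [apply Cmod_le_abs_sum|].
  destruct (f s) as [a1 a2]; destruct (f t) as [b1 b2]; destruct l as [l1 l2]; simpl in *.
  replace (a1 + - b1 + - ((s - t) * l1 - 0 * l2)) with (a1 - b1 - (s - t) * l1) by ring.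
  replace (a2 + - b2 + - ((s - t) * l2 + 0 * l1)) with (a2 - b2 - (s - t) * l2) by ring.
  lra.
Qed.

Lemma Rcont_ext f g : (forall s, f s = g s) -> Rcont f -> Rcont g.
Proof.
  intros E H t eps He. destruct (H t eps He) as [d [Hd H1]].
  exists d; split; auto. intros s Hs. rewrite <- !E. auto.
Qed.

Lemma Rcont_const c : Rcont (fun _ => c).
Proof.
  intros t eps He. exists 1; split; [lra|]. intros.
  replace (c - c)%C with (RtoC 0) by ring. rewrite Cmod_0; auto.
Qed.

Lemma Rcont_id : Rcont (fun s => RtoC s).
Proof.
  intros t eps He. exists eps; split; auto. intros s Hs.
  rewrite <- RtoC_minus, Cmod_R. exact Hs.
Qed.

Lemma Rcont_plus f g : Rcont f -> Rcont g -> Rcont (fun s => f s + g s)%C.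
Proof.
  intros Hf Hg t eps He.
  destruct (Hf t (eps/2) ltac:(lra)) as [d1 [Hd1 H1]].
  destruct (Hg t (eps/2) ltac:(lra)) as [d2 [Hd2 H2]].
  exists (Rmin d1 d2); split; [apply Rmin_pos; auto|].
  intros s Hs. specialize (H1 s ltac:(eapply Rlt_le_trans; [apply Hs|apply Rmin_l])).
  specialize (H2 s ltac:(eapply Rlt_le_trans; [apply Hs|apply Rmin_r])).
  replace (f s + g s - (f t + g t))%C with ((f s - f t) + (g s - g t))%C by ring.
  eapply Rle_lt_trans; [apply Cmod_triangle|lra].
Qed.

Lemma Rcont_mult f g : Rcont f -> Rcont g -> Rcont (fun s => f s * g s)%C.
Proof.
  intros Hf Hg t eps He.
  set (A := Cmod (f t) + 1). set (B := Cmod (g t) + 1).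
  assert (HA : 0 < A) by (unfold A; generalize (Cmod_ge_0 (f t)); lra).
  assert (HB : 0 < B) by (unfold B; generalize (Cmod_ge_0 (g t)); lra).
  destruct (Hf t (Rmin 1 (eps / (3 * B)))) as [d1 [Hd1 H1]].
  { apply Rmin_pos; [lra|apply Rdiv_lt_0_compat; lra]. }
  destruct (Hg t (eps / (3 * A)) ltac:(apply Rdiv_lt_0_compat; lra)) as [d2 [Hd2 H2]].
  exists (Rmin d1 d2); split; [apply Rmin_pos; auto|].
  intros s Hs. specialize (H1 s ltac:(eapply Rlt_le_trans; [apply Hs|apply Rmin_l])).
  specialize (H2 s ltac:(eapply Rlt_le_trans; [apply Hs|apply Rmin_r])).
  generalize (Rmin_l 1 (eps / (3 * B))) (Rmin_r 1 (eps / (3 * B))); intros.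
  assert (Hfs : Cmod (f s) <= A).
  { replace (f s) with ((f s - f t) + f t)%C by ring.
    eapply Rle_trans; [apply Cmod_triangle|]. unfold A; lra. }
  replace (f s * g s - f t * g t)%C with (f s * (g s - g t) + (f s - f t) * g t)%C by ring.
  eapply Rle_lt_trans; [apply Cmod_triangle|]. rewrite !Cmod_mult.
  assert (E1 : Cmod (f s) * Cmod (g s - g t) <= A * (eps / (3 * A)))
    by (apply Rmult_le_compat; auto using Cmod_ge_0; lra).
  assert (E2 : Cmod (f s - f t) * Cmod (g t) <= eps / (3 * B) * B)
    by (apply Rmult_le_compat; auto using Cmod_ge_0; try lra; unfold B; lra).
  replace (A * (eps / (3 * A))) with (eps / 3) in E1 by (field; lra).
  replace (eps / (3 * B) * B) with (eps / 3) in E2 by (field; lra).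
  lra.
Qed.

Lemma Rcont_minus f g : Rcont f -> Rcont g -> Rcont (fun s => f s - g s)%C.
Proof.
  intros Hf Hg. apply (Rcont_ext (fun s => f s + RtoC (-1) * g s)%C).
  - intros s. unfold RtoC, Cminus, Cplus, Copp, Cmult; simpl. f_equal; ring.
  - apply Rcont_plus; auto. apply Rcont_mult; auto. apply Rcont_const.
Qed.

Lemma Rcont_pow f n : Rcont f -> Rcont (fun s => (f s) ^ n)%C.
Proof. intros H. induction n; [exact (Rcont_const (RtoC 1))|exact (Rcont_mult _ _ H IHn)]. Qed.

Lemma Rcont_comp (F : C -> C) (w : R -> C) :
  (forall t, Ccont_at F (w t)) -> Rcont w -> Rcont (fun s => F (w s)).
Proof.
  intros HF Hw t eps He. destruct (HF t eps He) as [d1 [Hd1 H1]].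
  destruct (Hw t d1 Hd1) as [d2 [Hd2 H2]]. exists d2; split; auto.
Qed.

Lemma Rcont_at_continuous (f : R -> C) t :
  Rcont_at f t -> @continuous R_UniformSpace C_R_CompleteNormedModule f t.
Proof.
  intros H. apply filterlim_locally. intros [e He].
  destruct (H e He) as [d [Hd H1]]. exists (mkposreal d Hd). intros s Hs.
  specialize (H1 s Hs).
  split; unfold ball; simpl; unfold AbsRing_ball, abs, minus, plus, opp; simpl;
    eapply Rle_lt_trans; try apply H1; destruct (f s), (f t).
  - apply (re_le_Cmod ((r - r1)%R, (r0 - r2)%R)).
  - apply (im_le_Cmod ((r - r1)%R, (r0 - r2)%R)).
Qed.

Lemma is_Rderive_is_derive (f : R -> C) t l :
  is_Rderive f t l -> @is_derive R_AbsRing C_R_NormedModule f t l.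
Proof.
  intros HD. split; [apply is_linear_scal_l|].
  intros x Hx.
  apply (@is_filter_lim_locally_unique R_AbsRing (AbsRing_NormedModule R_AbsRing)) in Hx.
  subst x. intros [e He]. destruct (HD e He) as [d [Hd H1]].
  exists (mkposreal d Hd). intros s Hs.
  specialize (H1 s Hs). rewrite <- !Cmod_norm, scal_R_Cmult. exact H1.
Qed.

Definition CInt (f : R -> C) (a b : R) : C := @RInt C_R_CompleteNormedModule f a b.

Lemma ex_CInt f a b : Rcont f -> @ex_RInt C_R_CompleteNormedModule f a b.
Proof. intros H. apply ex_RInt_continuous. intros t _. now apply Rcont_at_continuous. Qed.

Lemma CInt_correct f a b : Rcont f -> @is_RInt C_R_CompleteNormedModule f a b (CInt f a b).
Proof. intros H. apply RInt_correct. now apply ex_CInt. Qed.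

Lemma CInt_plus f g a b :
  Rcont f -> Rcont g -> CInt (fun t => f t + g t)%C a b = (CInt f a b + CInt g a b)%C.
Proof.
  intros Hf Hg. apply (@is_RInt_unique C_R_CompleteNormedModule).
  apply (@is_RInt_plus C_R_CompleteNormedModule); now apply CInt_correct.
Qed.

Lemma CInt_minus f g a b :
  Rcont f -> Rcont g -> CInt (fun t => f t - g t)%C a b = (CInt f a b - CInt g a b)%C.
Proof.
  intros Hf Hg. apply (@is_RInt_unique C_R_CompleteNormedModule).
  apply (@is_RInt_minus C_R_CompleteNormedModule); now apply CInt_correct.
Qed.

(* [C_R_CompleteNormedModule] is only an [R]-module, so a complex factor is
   pulled out componentwise. *)
Lemma CInt_scal c f a b : Rcont f -> CInt (fun t => c * f t)%C a b = (c * CInt f a b)%C.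
Proof.
  intros Hf. unfold CInt at 1. apply (@is_RInt_unique C_R_CompleteNormedModule).
  generalize (CInt_correct f a b Hf). set (I := CInt f a b). intros HI.
  assert (H1 := @is_RInt_fct_extend_fst R_NormedModule R_NormedModule f a b I HI).
  assert (H2 := @is_RInt_fct_extend_snd R_NormedModule R_NormedModule f a b I HI).
  destruct c as [c1 c2].
  replace ((c1, c2) * I)%C with ((c1 * fst I - c2 * snd I)%R, (c1 * snd I + c2 * fst I)%R)
    by (destruct I; unfold Cmult; simpl; f_equal; ring).
  apply (@is_RInt_fct_extend_pair R_NormedModule R_NormedModule).
  - eapply (@is_RInt_ext R_NormedModule).
    2:{ apply (@is_RInt_minus R_NormedModule).
        - apply (@is_RInt_scal R_NormedModule _ _ _ c1 _ H1).
        - apply (@is_RInt_scal R_NormedModule _ _ _ c2 _ H2). }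
    intros x _. unfold minus, plus, opp, scal; simpl. unfold mult; simpl.
    destruct (f x) as [p q]; simpl; ring.
  - eapply (@is_RInt_ext R_NormedModule).
    2:{ apply (@is_RInt_plus R_NormedModule).
        - apply (@is_RInt_scal R_NormedModule _ _ _ c1 _ H2).
        - apply (@is_RInt_scal R_NormedModule _ _ _ c2 _ H1). }
    intros x _. unfold minus, plus, opp, scal; simpl. unfold mult; simpl.
    destruct (f x) as [p q]; simpl; ring.
Qed.

Lemma CInt_const c a b : CInt (fun _ => c) a b = (RtoC (b - a) * c)%C.
Proof. unfold CInt. rewrite RInt_const. apply scal_R_Cmult. Qed.

Lemma CInt_Chasles f a b c : Rcont f -> (CInt f a b + CInt f b c)%C = CInt f a c.
Proof. intros H. apply (@RInt_Chasles C_R_CompleteNormedModule); now apply ex_CInt. Qed.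

Lemma CInt_swap f a b : Rcont f -> CInt f b a = (- CInt f a b)%C.
Proof.
  intros H. unfold CInt. rewrite <- (@opp_RInt_swap C_R_CompleteNormedModule); [reflexivity|].
  now apply ex_CInt.
Qed.

Lemma CInt_point f a : CInt f a a = RtoC 0.
Proof. unfold CInt. now rewrite RInt_point. Qed.

Lemma CInt_ext f g a b :
  (forall t, Rmin a b <= t <= Rmax a b -> f t = g t) -> CInt f a b = CInt g a b.
Proof. intros H. apply (@RInt_ext C_R_CompleteNormedModule). intros; apply H; lra. Qed.

Lemma CInt_bound f a b M : a <= b -> Rcont f ->
  (forall t, a <= t <= b -> Cmod (f t) <= M) -> Cmod (CInt f a b) <= (b - a) * M.
Proof.
  intros Hab Hf HM. rewrite Cmod_norm. apply (@norm_RInt_le_const C_R_NormedModule f a b); auto.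
  - intros t Ht. rewrite <- Cmod_norm. auto.
  - now apply CInt_correct.
Qed.

Lemma CInt_bound_abs f a b M : Rcont f ->
  (forall t, Rmin a b <= t <= Rmax a b -> Cmod (f t) <= M) ->
  Cmod (CInt f a b) <= Rabs (b - a) * M.
Proof.
  intros Hf HM. destruct (Rle_dec a b).
  - rewrite Rabs_pos_eq by lra. apply CInt_bound; auto.
    intros; apply HM. rewrite Rmin_left, Rmax_right; lra.
  - rewrite (CInt_swap f b a Hf), Cmod_opp, Rabs_minus_sym, Rabs_pos_eq by lra.
    apply CInt_bound; auto; [lra|]. intros; apply HM. rewrite Rmin_right, Rmax_left; lra.
Qed.

Lemma CInt_derive (H h : R -> C) a b :
  (forall t, is_Rderive H t (h t)) -> Rcont h -> CInt h a b = (H b - H a)%C.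
Proof.
  intros HD Hc. apply (@is_RInt_unique C_R_CompleteNormedModule).
  apply (@is_RInt_derive C_R_CompleteNormedModule).
  - intros t _. now apply is_Rderive_is_derive.
  - intros t _. now apply Rcont_at_continuous.
Qed.

Lemma Rcont_Cmod_continuity (phi : R -> C) t :
  Rcont_at phi t -> continuity_pt (fun s => Cmod (phi s)) t.
Proof.
  intros H. unfold continuity_pt, continue_in, limit1_in, limit_in. simpl. unfold R_dist.
  intros eps He. destruct (H eps He) as [d [Hd H1]]. exists d; split; auto.
  intros s [_ Hs]. specialize (H1 s Hs).
  apply Rabs_lt_between.
  generalize (Cmod_triangle_rev (phi s) (phi t)) (Cmod_triangle_rev (phi t) (phi s)).
  rewrite (Cmod_minus_sym (phi t)). intros. split; lra.
Qed.

Lemma Rcont_bounded (phi : R -> C) a b : a <= b -> Rcont phi ->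
  exists M, 0 <= M /\ forall t, a <= t <= b -> Cmod (phi t) <= M.
Proof.
  intros Hab H. destruct (continuity_ab_maj (fun s => Cmod (phi s)) a b Hab) as [x [Hx _]].
  - intros c _. now apply Rcont_Cmod_continuity.
  - exists (Cmod (phi x)). split; [apply Cmod_ge_0|auto].
Qed.

(** * Integrals over circles *)

Definition circle (r t : R) : C := (r * cos t, r * sin t).

Lemma is_Rderive_circle r t : is_Rderive (circle r) t (Ci * circle r t)%C.
Proof.
  apply is_Rderive_pair; unfold circle; simpl.
  - replace (0 * (r * cos t) - 1 * (r * sin t)) with (r * - sin t) by ring.
    apply derivable_pt_lim_scal. apply derivable_pt_lim_cos.
  - replace (0 * (r * sin t) + 1 * (r * cos t)) with (r * cos t) by ring.
    apply derivable_pt_lim_scal. apply derivable_pt_lim_sin.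
Qed.

Lemma Cmod_circle r t : 0 <= r -> Cmod (circle r t) = r.
Proof.
  intros Hr. unfold circle, Cmod; simpl.
  replace (r * cos t * (r * cos t * 1) + r * sin t * (r * sin t * 1))
    with (r * r * (Rsqr (sin t) + Rsqr (cos t))) by (unfold Rsqr; ring).
  rewrite sin2_cos2, Rmult_1_r. apply sqrt_square; auto.
Qed.

Lemma circle_2PI r : circle r (2 * PI) = circle r 0.
Proof. unfold circle. now rewrite cos_2PI, sin_2PI, cos_0, sin_0. Qed.

Lemma circle_neq0 r t : 0 < r -> circle r t <> RtoC 0.
Proof. intros Hr E. generalize (Cmod_circle r t ltac:(lra)). rewrite E, Cmod_0. lra. Qed.

Lemma circle_sub_bound r t z : 0 <= r -> r - Cmod z <= Cmod (circle r t - z).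
Proof. intros Hr. rewrite <- (Cmod_circle r t Hr) at 1. apply Cmod_triangle_rev. Qed.

Lemma circle_sub_neq0 r t z : Cmod z < r -> (circle r t - z)%C <> RtoC 0.
Proof.
  intros Hz E. assert (0 <= r) by (generalize (Cmod_ge_0 z); lra).
  generalize (circle_sub_bound r t z H). rewrite E, Cmod_0. lra.
Qed.

Lemma Rcont_circle r : Rcont (circle r).
Proof. intros t. eapply is_Rderive_cont_at. apply is_Rderive_circle. Qed.

Lemma Rcont_circle_comp (G : C -> C) r :
  (forall t, exists a, is_Cderive G (circle r t) a) -> Rcont (fun s => G (circle r s)).
Proof.
  intros H t. destruct (H t) as [a Ha].
  eapply is_Rderive_cont_at. apply is_Rderive_comp; [exact Ha|apply is_Rderive_circle].
Qed.

Lemma Rcont_circle_Ccont (G : C -> C) r : Ccont G -> Rcont (fun s => G (circle r s)).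
Proof. intros H. apply Rcont_comp; [intros; apply H|apply Rcont_circle]. Qed.

Lemma Rcont_circle_inv_sub r z : Cmod z < r -> Rcont (fun t => / (circle r t - z))%C.
Proof.
  intros Hz. apply (Rcont_circle_comp (fun u => / (u - z))%C). intros t. eexists.
  apply (is_Cderive_comp (fun u => / u)%C (fun u => u - z)%C).
  - apply is_Cderive_inv. now apply circle_sub_neq0.
  - apply is_Cderive_minus; [apply is_Cderive_id|apply is_Cderive_const].
Qed.

Lemma Rcont_circle_inv r : 0 < r -> Rcont (fun t => / circle r t)%C.
Proof.
  intros Hr. apply (Rcont_ext (fun t => / (circle r t - 0))%C).
  - intros t. f_equal. ring.
  - apply Rcont_circle_inv_sub. rewrite Cmod_0. exact Hr.
Qed.

Lemma Rcont_cauchy_kernel r z : Cmod z < r -> Rcont (fun t => circle r t / (circle r t - z))%C.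
Proof. intros Hz. apply Rcont_mult; [apply Rcont_circle|now apply Rcont_circle_inv_sub]. Qed.

Lemma CInt_circle_derive r (F F' : C -> C) :
  (forall t, is_Cderive F (circle r t) (F' (circle r t))) -> Rcont (fun s => F' (circle r s)) ->
  CInt (fun t => F' (circle r t) * (Ci * circle r t))%C 0 (2 * PI) = RtoC 0.
Proof.
  intros HF Hc. rewrite (CInt_derive (fun t => F (circle r t))).
  - rewrite circle_2PI. ring.
  - intros t. apply is_Rderive_comp; [apply HF|apply is_Rderive_circle].
  - apply Rcont_mult; auto. apply Rcont_mult; [apply Rcont_const|apply Rcont_circle].
Qed.

Lemma INR_C_neq0 n : (0 < n)%nat -> RtoC (INR n) <> RtoC 0.
Proof. intros H E. apply RtoC_inj in E. apply (not_0_INR n); [lia|exact E]. Qed.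

Lemma CInt_circle_pow r k :
  0 < r -> (0 < k)%nat -> CInt (fun t => (circle r t) ^ k)%C 0 (2 * PI) = RtoC 0.
Proof.
  intros Hr Hk.
  set (c := (/ (Ci * RtoC (INR k)))%C).
  assert (Hc : (Ci * RtoC (INR k))%C <> RtoC 0)
    by (apply Cmult_neq_0; [apply Ci_nz|now apply INR_C_neq0]).
  rewrite <- (CInt_circle_derive r (fun u => c * u ^ k)%C
                (fun u => c * (RtoC (INR k) * u ^ pred k))%C).
  - apply CInt_ext. intros t _. unfold c. destruct k; [lia|]. simpl pred.
    replace (/ (Ci * INR (S k)) * (INR (S k) * circle r t ^ k) * (Ci * circle r t))%C
      with ((/ (Ci * INR (S k)) * (Ci * INR (S k))) * (circle r t * circle r t ^ k))%C by ring.
    rewrite Cinv_l; auto. simpl. ring.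
  - intros t. apply is_Cderive_scal. apply is_Cderive_pow.
  - apply (Rcont_circle_comp (fun u => c * (RtoC (INR k) * u ^ pred k))%C). intros t.
    eexists. apply is_Cderive_scal, is_Cderive_scal, is_Cderive_pow.
Qed.

Lemma CInt_circle_inv_pow r k :
  0 < r -> (0 < k)%nat -> CInt (fun t => (/ circle r t) ^ k)%C 0 (2 * PI) = RtoC 0.
Proof.
  intros Hr Hk.
  assert (Hk' : RtoC (INR k) <> RtoC 0) by now apply INR_C_neq0.
  set (c := (/ (Ci * RtoC (INR k)))%C).
  rewrite <- (CInt_circle_derive r (fun u => - c * (/ u) ^ k)%C (fun u => / Ci * (/ u) ^ (S k))%C).
  - apply CInt_ext. intros t _. generalize (circle_neq0 r t Hr). intros Hu.
    set (u := circle r t).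
    replace (/ Ci * (/ u) ^ S k * (Ci * u))%C with ((/ Ci * Ci) * (/ u) ^ k * (/ u * u))%C
      by (simpl; ring).
    rewrite !Cinv_l; [ring|auto|apply Ci_nz].
  - intros t. generalize (circle_neq0 r t Hr). intros Hu. set (u := circle r t).
    replace (/ Ci * (/ u) ^ S k)%C
      with (- c * ((- / (u * u)) * (RtoC (INR k) * (/ u) ^ (pred k))))%C.
    + apply is_Cderive_scal.
      apply (is_Cderive_comp (fun w => w ^ k)%C (fun w => / w)%C u).
      * apply is_Cderive_pow.
      * now apply is_Cderive_inv.
    + unfold c. destruct k; [lia|]. simpl pred. simpl Cpow.
      field. repeat split; auto using Ci_nz.
  - apply Rcont_mult; [apply Rcont_const|]. apply Rcont_pow. now apply Rcont_circle_inv.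
Qed.

(** * Goursat's lemma for rectangles *)

Definition hseg (g : C -> C) (y a b : R) : C := CInt (fun t => g (t, y)) a b.
Definition vseg (g : C -> C) (x a b : R) : C := CInt (fun s => g (x, s)) a b.

Definition rect_int (g : C -> C) (x0 x1 y0 y1 : R) : C :=
  (hseg g y0 x0 x1 + Ci * vseg g x1 y0 y1 - hseg g y1 x0 x1 - Ci * vseg g x0 y0 y1)%C.

Lemma C_decomp (a b : R) : ((a, b) = RtoC a + Ci * RtoC b)%C.
Proof. unfold Cplus, Cmult, RtoC, Ci; simpl. f_equal; ring. Qed.

Lemma Rcont_hline g y : Ccont g -> Rcont (fun t => g (t, y)).
Proof.
  intros Hg. apply Rcont_comp; [intros; apply Hg|].
  apply (Rcont_ext (fun s => RtoC s + Ci * RtoC y)%C).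
  - intros s. now rewrite <- C_decomp.
  - apply Rcont_plus; [apply Rcont_id|apply Rcont_const].
Qed.

Lemma Rcont_vline g x : Ccont g -> Rcont (fun s => g (x, s)).
Proof.
  intros Hg. apply Rcont_comp; [intros; apply Hg|].
  apply (Rcont_ext (fun s => RtoC x + Ci * RtoC s)%C).
  - intros s. now rewrite <- C_decomp.
  - apply Rcont_plus; [apply Rcont_const|apply Rcont_mult; [apply Rcont_const|apply Rcont_id]].
Qed.

Lemma le_eps_mult_0 a K : 0 <= K -> (forall eps, 0 < eps -> a <= eps * K) -> a <= 0.
Proof.
  intros HK H. apply Rle_plus_epsilon. intros eps He.
  specialize (H (eps / (K + 1)) ltac:(apply Rdiv_lt_0_compat; lra)).
  assert (eps / (K + 1) * K <= eps).
  { apply Rle_trans with (eps / (K + 1) * (K + 1)).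
    - apply Rmult_le_compat_l; [left; apply Rdiv_lt_0_compat|]; lra.
    - right. field. lra. }
  lra.
Qed.

Section RectangleIntegrals.

Variable g : C -> C.
Hypothesis g_cont : Ccont g.

Lemma rect_int_split_x x0 xm x1 y0 y1 :
  rect_int g x0 x1 y0 y1 = (rect_int g x0 xm y0 y1 + rect_int g xm x1 y0 y1)%C.
Proof.
  unfold rect_int, hseg.
  rewrite <- (CInt_Chasles (fun t => g (t, y0)) x0 xm x1) by now apply Rcont_hline.
  rewrite <- (CInt_Chasles (fun t => g (t, y1)) x0 xm x1) by now apply Rcont_hline.
  ring.
Qed.

Lemma rect_int_split_y x0 x1 y0 ym y1 :
  rect_int g x0 x1 y0 y1 = (rect_int g x0 x1 y0 ym + rect_int g x0 x1 ym y1)%C.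
Proof.
  unfold rect_int, vseg.
  rewrite <- (CInt_Chasles (fun s => g (x1, s)) y0 ym y1) by now apply Rcont_vline.
  rewrite <- (CInt_Chasles (fun s => g (x0, s)) y0 ym y1) by now apply Rcont_vline.
  ring.
Qed.

Lemma rect_int_degen_x x y0 y1 : rect_int g x x y0 y1 = RtoC 0.
Proof. unfold rect_int, hseg. rewrite !CInt_point. ring. Qed.

Lemma rect_int_degen_y x0 x1 y : rect_int g x0 x1 y y = RtoC 0.
Proof. unfold rect_int, vseg. rewrite !CInt_point. ring. Qed.

Lemma rect_int_swap_x x0 x1 y0 y1 : rect_int g x1 x0 y0 y1 = (- rect_int g x0 x1 y0 y1)%C.
Proof.
  unfold rect_int, hseg.
  rewrite (CInt_swap (fun t => g (t, y0)) x0 x1), (CInt_swap (fun t => g (t, y1)) x0 x1)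
    by now apply Rcont_hline.
  ring.
Qed.

Lemma rect_int_swap_y x0 x1 y0 y1 : rect_int g x0 x1 y1 y0 = (- rect_int g x0 x1 y0 y1)%C.
Proof.
  unfold rect_int, vseg.
  rewrite (CInt_swap (fun s => g (x0, s)) y0 y1), (CInt_swap (fun s => g (x1, s)) y0 y1)
    by now apply Rcont_vline.
  ring.
Qed.

Lemma rect_int_bound x0 x1 y0 y1 M : x0 <= x1 -> y0 <= y1 ->
  (forall w : C, x0 <= fst w <= x1 -> y0 <= snd w <= y1 -> Cmod (g w) <= M) ->
  Cmod (rect_int g x0 x1 y0 y1) <= 2 * (x1 - x0) * M + 2 * (y1 - y0) * M.
Proof.
  intros Hx Hy HM. unfold rect_int, hseg, vseg.
  assert (A1 : Cmod (CInt (fun t => g (t, y0)) x0 x1) <= (x1 - x0) * M).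
  { apply CInt_bound; auto using Rcont_hline. intros t Ht. apply HM; simpl; lra. }
  assert (A2 : Cmod (CInt (fun t => g (t, y1)) x0 x1) <= (x1 - x0) * M).
  { apply CInt_bound; auto using Rcont_hline. intros t Ht. apply HM; simpl; lra. }
  assert (A3 : Cmod (CInt (fun s => g (x0, s)) y0 y1) <= (y1 - y0) * M).
  { apply CInt_bound; auto using Rcont_vline. intros t Ht. apply HM; simpl; lra. }
  assert (A4 : Cmod (CInt (fun s => g (x1, s)) y0 y1) <= (y1 - y0) * M).
  { apply CInt_bound; auto using Rcont_vline. intros t Ht. apply HM; simpl; lra. }
  eapply Rle_trans; [apply Cmod_triangle_minus|].
  eapply Rle_trans; [apply Rplus_le_compat_r, Cmod_triangle_minus|].
  eapply Rle_trans; [apply Rplus_le_compat_r, Rplus_le_compat_r, Cmod_triangle|].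
  rewrite !Cmod_mult, !Cmod_Ci. lra.
Qed.

End RectangleIntegrals.

Lemma rect_int_minus g h x0 x1 y0 y1 : Ccont g -> Ccont h ->
  rect_int (fun w => g w - h w)%C x0 x1 y0 y1 = (rect_int g x0 x1 y0 y1 - rect_int h x0 x1 y0 y1)%C.
Proof.
  intros Hg Hh. unfold rect_int, hseg, vseg.
  rewrite !(CInt_minus (fun t => g (t, _)) (fun t => h (t, _))) by now apply Rcont_hline.
  rewrite !(CInt_minus (fun t => g (_, t)) (fun t => h (_, t))) by now apply Rcont_vline.
  ring.
Qed.

Lemma CInt_affine c0 c1 a b :
  CInt (fun t => c0 + c1 * RtoC t)%C a b = (c0 * RtoC (b - a) + c1 * RtoC ((b * b - a * a) / 2))%C.
Proof.
  rewrite CInt_plus, CInt_const, CInt_scal.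
  2, 3, 4: repeat apply Rcont_mult; auto using Rcont_const, Rcont_id.
  rewrite (CInt_derive (fun t => RtoC (t * t / 2)) (fun t => RtoC t)).
  - rewrite <- RtoC_minus. replace (b * b / 2 - a * a / 2) with ((b * b - a * a) / 2) by field. ring.
  - intros t. apply is_Rderive_pair; simpl.
    + apply is_derive_Reals. auto_derive; auto. field.
    + apply derivable_pt_lim_const.
  - apply Rcont_id.
Qed.

Lemma Ccont_affine al be : Ccont (fun w => al + be * w)%C.
Proof.
  intros z. eapply is_Cderive_cont_at.
  apply is_Cderive_plus; [apply is_Cderive_const|apply is_Cderive_scal, is_Cderive_id].
Qed.

Lemma hseg_affine al be y a b : hseg (fun w => al + be * w)%C y a b =
  ((al + be * (Ci * RtoC y)) * RtoC (b - a) + be * RtoC ((b * b - a * a) / 2))%C.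
Proof. unfold hseg. rewrite <- CInt_affine. apply CInt_ext. intros t _. rewrite C_decomp. ring. Qed.

Lemma vseg_affine al be x a b : vseg (fun w => al + be * w)%C x a b =
  ((al + be * RtoC x) * RtoC (b - a) + (be * Ci) * RtoC ((b * b - a * a) / 2))%C.
Proof. unfold vseg. rewrite <- CInt_affine. apply CInt_ext. intros t _. rewrite C_decomp. ring. Qed.

Lemma rect_int_affine al be x0 x1 y0 y1 : rect_int (fun w => al + be * w)%C x0 x1 y0 y1 = RtoC 0.
Proof. unfold rect_int. rewrite !hseg_affine, !vseg_affine, !RtoC_minus. ring. Qed.

(* A rectangle near a point of differentiability only sees the error of the
   tangent map, since affine maps have vanishing rectangle integrals. *)
Lemma rect_int_tangent_bound g p L x0 x1 y0 y1 eta : Ccont g -> x0 <= x1 -> y0 <= y1 ->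
  (forall w : C, x0 <= fst w <= x1 -> y0 <= snd w <= y1 ->
     Cmod (g w - g p - L * (w - p)) <= eta) ->
  Cmod (rect_int g x0 x1 y0 y1) <= 2 * (x1 - x0) * eta + 2 * (y1 - y0) * eta.
Proof.
  intros Hg Hx Hy Hw.
  set (aff := (fun w => (g p - L * p) + L * w)%C).
  assert (Hd : Ccont (fun w => g w - aff w)%C).
  { intros z eps He. destruct (Hg z (eps / 2) ltac:(lra)) as [d1 [Hd1 H1]].
    destruct (Ccont_affine (g p - L * p)%C L z (eps / 2) ltac:(lra)) as [d2 [Hd2 H2]].
    exists (Rmin d1 d2); split; [apply Rmin_pos; auto|]. intros w Hw'.
    specialize (H1 w ltac:(eapply Rlt_le_trans; [apply Hw'|apply Rmin_l])).
    specialize (H2 w ltac:(eapply Rlt_le_trans; [apply Hw'|apply Rmin_r])).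
    replace (g w - aff w - (g z - aff z))%C with ((g w - g z) - (aff w - aff z))%C by ring.
    eapply Rle_lt_trans; [apply Cmod_triangle_minus|]. unfold aff. lra. }
  replace (rect_int g x0 x1 y0 y1) with (rect_int (fun w => g w - aff w)%C x0 x1 y0 y1).
  - apply rect_int_bound; auto. intros w H1 H2.
    replace (g w - aff w)%C with (g w - g p - L * (w - p))%C by (unfold aff; ring). auto.
  - rewrite rect_int_minus by (auto; apply Ccont_affine). unfold aff. rewrite rect_int_affine. ring.
Qed.

Lemma nested_dyadic_limit (u : nat -> R) (w : R) : 0 <= w ->
  (forall n, u n <= u (S n) /\ u (S n) + w * (/2) ^ (S n) <= u n + w * (/2) ^ n) ->
  exists X, forall n, u n <= X <= u n + w * (/2) ^ n.
Proof.
  intros Hw Hstep.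
  assert (Hnest : forall n j : nat,
    u n <= u (n + j)%nat /\ u (n + j)%nat + w * (/2) ^ (n + j) <= u n + w * (/2) ^ n).
  { intros n j. induction j; [rewrite Nat.add_0_r; lra|].
    rewrite Nat.add_succ_r. destruct (Hstep (n + j)%nat). lra. }
  assert (Hpos : forall n : nat, 0 <= w * (/2) ^ n) by (intros; apply Rmult_le_pos; [lra|apply pow_le; lra]).
  assert (Hle : forall n m : nat, u m <= u n + w * (/2) ^ n).
  { intros n m. destruct (Compare_dec.le_lt_dec n m) as [Hnm|Hnm].
    - replace m with (n + (m - n))%nat by lia.
      destruct (Hnest n (m - n)%nat). generalize (Hpos (n + (m - n))%nat). lra.
    - replace n with (m + (n - m))%nat by lia.
      destruct (Hnest m (n - m)%nat). generalize (Hpos (m + (n - m))%nat). lra. }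
  set (E := fun x => exists n, x = u n).
  destruct (completeness E) as [X [HX1 HX2]].
  - exists (u 0%nat + w * (/2) ^ 0). intros x [m ->]. apply Hle.
  - exists (u 0%nat). now exists 0%nat.
  - exists X. intros n. split.
    + apply HX1. now exists n.
    + apply HX2. intros x [m ->]. apply Hle.
Qed.

Section Goursat.

Variable g : C -> C.
Hypothesis g_cont : Ccont g.
Variables d e : R.
Hypothesis d_ge0 : 0 <= d.
Hypothesis e_ge0 : 0 <= e.

Let dyadic_rect x y n := rect_int g x (x + d * (/2) ^ n) y (y + e * (/2) ^ n).

Lemma dyadic_rect_quadrisect x y n :
  let h := d * (/2) ^ (S n) in let k := e * (/2) ^ (S n) in
  dyadic_rect x y n = (dyadic_rect x y (S n) + dyadic_rect (x + h) y (S n)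
     + dyadic_rect x (y + k) (S n) + dyadic_rect (x + h) (y + k) (S n))%C.
Proof.
  intros h k. unfold dyadic_rect. fold h k.
  replace (x + d * (/2) ^ n) with (x + h + h) by (unfold h; simpl; field).
  replace (y + e * (/2) ^ n) with (y + k + k) by (unfold k; simpl; field).
  rewrite (rect_int_split_x g g_cont x (x + h)), (rect_int_split_y g g_cont x (x + h) y (y + k)),
    (rect_int_split_y g g_cont (x + h) (x + h + h) y (y + k)).
  ring.
Qed.

Definition next_corner x y n : R * R :=
  let h := d * (/2) ^ (S n) in let k := e * (/2) ^ (S n) in
  let q := Cmod (dyadic_rect x y n) / 4 in
  if Rle_dec q (Cmod (dyadic_rect x y (S n))) then (x, y)
  else if Rle_dec q (Cmod (dyadic_rect (x + h) y (S n))) then (x + h, y)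
  else if Rle_dec q (Cmod (dyadic_rect x (y + k) (S n))) then (x, y + k)
  else (x + h, y + k).

Lemma next_corner_spec x y n :
  let p := next_corner x y n in
  Cmod (dyadic_rect x y n) / 4 <= Cmod (dyadic_rect (fst p) (snd p) (S n)) /\
  x <= fst p <= x + d * (/2) ^ (S n) /\ y <= snd p <= y + e * (/2) ^ (S n).
Proof.
  assert (Hh : 0 <= d * (/2) ^ (S n)) by (apply Rmult_le_pos; [|apply pow_le]; lra).
  assert (Hk : 0 <= e * (/2) ^ (S n)) by (apply Rmult_le_pos; [|apply pow_le]; lra).
  unfold next_corner.
  destruct (Rle_dec _ _); cbn [fst snd]; [repeat split; auto; lra|].
  destruct (Rle_dec _ _); cbn [fst snd]; [repeat split; auto; lra|].
  destruct (Rle_dec _ _); cbn [fst snd]; [repeat split; auto; lra|].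
  repeat split; try lra.
  generalize (dyadic_rect_quadrisect x y n); simpl; intros E.
  match type of E with _ = (?B1 + ?B2 + ?B3 + ?B4)%C =>
    assert (Cmod (dyadic_rect x y n) <= Cmod B1 + Cmod B2 + Cmod B3 + Cmod B4)
      by (rewrite E; repeat (eapply Rle_trans; [apply Cmod_triangle|apply Rplus_le_compat_r]);
          lra) end.
  simpl in *. lra.
Qed.

Fixpoint corner x0 y0 n : R * R :=
  match n with
  | O => (x0, y0)
  | S m => next_corner (fst (corner x0 y0 m)) (snd (corner x0 y0 m)) m
  end.

Lemma corner_rect_lower_bound x0 y0 n :
  Cmod (dyadic_rect x0 y0 0) * (/4) ^ n
  <= Cmod (dyadic_rect (fst (corner x0 y0 n)) (snd (corner x0 y0 n)) n).
Proof.
  induction n; [simpl; lra|].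
  simpl corner. destruct (next_corner_spec (fst (corner x0 y0 n)) (snd (corner x0 y0 n)) n) as [H _].
  simpl pow. lra.
Qed.

Lemma corner_limit x0 y0 : exists X Y, forall n,
  fst (corner x0 y0 n) <= X <= fst (corner x0 y0 n) + d * (/2) ^ n /\
  snd (corner x0 y0 n) <= Y <= snd (corner x0 y0 n) + e * (/2) ^ n.
Proof.
  destruct (nested_dyadic_limit (fun n => fst (corner x0 y0 n)) d d_ge0) as [X HX].
  { intros n. simpl corner.
    destruct (next_corner_spec (fst (corner x0 y0 n)) (snd (corner x0 y0 n)) n) as [_ [H _]].
    simpl pow in *. lra. }
  destruct (nested_dyadic_limit (fun n => snd (corner x0 y0 n)) e e_ge0) as [Y HY].
  { intros n. simpl corner.
    destruct (next_corner_spec (fst (corner x0 y0 n)) (snd (corner x0 y0 n)) n) as [_ [_ H]].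
    simpl pow in *. lra. }
  exists X, Y. intros n. split; auto.
Qed.

(* Quadrisection: the integral over the n-th nested rectangle is at least
   4^-n times the original one, and at most o(4^-n) by differentiability at
   the common point of all the rectangles. *)
Lemma goursat_dyadic x0 y0 :
  (forall w : C, x0 <= fst w <= x0 + d -> y0 <= snd w <= y0 + e -> exists l, is_Cderive g w l) ->
  rect_int g x0 (x0 + d) y0 (y0 + e) = RtoC 0.
Proof.
  intros Hhol.
  assert (Q0 : rect_int g x0 (x0 + d) y0 (y0 + e) = dyadic_rect x0 y0 0)
    by (unfold dyadic_rect; simpl; repeat f_equal; ring).
  rewrite Q0. apply Cmod_le_0.
  destruct (corner_limit x0 y0) as [X [Y HXY]].
  destruct (HXY 0%nat) as [HX0 HY0]. simpl in HX0, HY0.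
  destruct (Hhol (X, Y)) as [L HL]; simpl; try lra.
  apply (le_eps_mult_0 _ (2 * (d + e) * (d + e))); [nra|]. intros eps Heps.
  destruct (HL eps Heps) as [del [Hdel HL']].
  destruct (pow_lt_1_zero (/2) ltac:(rewrite Rabs_pos_eq; lra) (del / (d + e + 1)))
    as [N HN]; [apply Rdiv_lt_0_compat; lra|].
  specialize (HN N (le_n N)). set (p := (/2) ^ N) in *.
  assert (Hp : 0 < p) by (apply pow_lt; lra).
  rewrite Rabs_pos_eq in HN by lra.
  assert (Hsmall : (d + e) * p < del).
  { apply (Rmult_lt_compat_l (d + e + 1)) in HN; [|lra].
    replace ((d + e + 1) * (del / (d + e + 1))) with del in HN by (field; lra). nra. }
  generalize (corner_rect_lower_bound x0 y0 N).
  replace ((/4) ^ N) with (p * p) by (unfold p; rewrite <- Rpow_mult_distr; f_equal; field).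
  destruct (HXY N) as [HX HY]. fold p in HX, HY.
  set (xn := fst (corner x0 y0 N)) in *. set (yn := snd (corner x0 y0 N)) in *.
  assert (Hb : Cmod (dyadic_rect xn yn N)
               <= 2 * (d * p) * (eps * ((d + e) * p)) + 2 * (e * p) * (eps * ((d + e) * p))).
  { unfold dyadic_rect. fold p.
    apply Rle_trans with (2 * (xn + d * p - xn) * (eps * ((d + e) * p))
                          + 2 * (yn + e * p - yn) * (eps * ((d + e) * p))); [|right; ring].
    apply (rect_int_tangent_bound g (X, Y) L); auto; try nra.
    intros w Hw1 Hw2.
    assert (Hwz : Cmod (w - (X, Y)) <= (d + e) * p).
    { eapply Rle_trans; [apply Cmod_le_abs_sum|]. destruct w as [w1 w2]. simpl in *.
      assert (Rabs (w1 + - X) <= d * p) by (apply Rabs_le; lra).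
      assert (Rabs (w2 + - Y) <= e * p) by (apply Rabs_le; lra). lra. }
    eapply Rle_trans; [apply HL'; lra|]. apply Rmult_le_compat_l; lra. }
  intros HQ.
  assert (Cmod (dyadic_rect x0 y0 0) * (p * p) <= (eps * (2 * (d + e) * (d + e))) * (p * p)) by nra.
  apply Rmult_le_reg_r in H; nra.
Qed.

End Goursat.

Lemma goursat g x0 x1 y0 y1 : Ccont g -> x0 <= x1 -> y0 <= y1 ->
  (forall w : C, x0 <= fst w <= x1 -> y0 <= snd w <= y1 -> exists l, is_Cderive g w l) ->
  rect_int g x0 x1 y0 y1 = RtoC 0.
Proof.
  intros Hg Hx Hy Hhol.
  replace x1 with (x0 + (x1 - x0)) by ring. replace y1 with (y0 + (y1 - y0)) by ring.
  apply goursat_dyadic; auto; try lra.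
  intros w H1 H2. apply Hhol; lra.
Qed.

(** * Cauchy's theorem and integral formula on circles *)

Lemma rect_int_avoiding g z x0 x1 y0 y1 : Ccont g ->
  (forall w, w <> z -> exists l, is_Cderive g w l) -> x0 <= x1 -> y0 <= y1 ->
  (x1 < fst z \/ fst z < x0 \/ y1 < snd z \/ snd z < y0) -> rect_int g x0 x1 y0 y1 = RtoC 0.
Proof.
  intros Hg Hhol Hx Hy Hz. apply goursat; auto.
  intros w H1 H2. apply Hhol. intros ->. lra.
Qed.

Section Punctured.

Variable g : C -> C.
Hypothesis g_cont : Ccont g.

(* Cutting [[x0,x1]] at [a - s] and [a + s]; the outer strips are degenerate
   or avoid the line [x = a]. *)
Lemma rect_int_clamp_x a s x0 x1 y0 y1 :
  (forall u v, u <= v -> v < a \/ a < u -> rect_int g u v y0 y1 = RtoC 0) ->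
  x0 <= a <= x1 -> 0 < s ->
  rect_int g x0 x1 y0 y1 = rect_int g (Rmax x0 (a - s)) (Rmin x1 (a + s)) y0 y1.
Proof.
  intros Hoff Ha Hs.
  set (p := Rmax x0 (a - s)). set (q := Rmin x1 (a + s)).
  rewrite (rect_int_split_x g g_cont x0 p x1), (rect_int_split_x g g_cont p q x1).
  assert (Hl : rect_int g x0 p y0 y1 = RtoC 0).
  { unfold p. destruct (Rle_dec (a - s) x0).
    - rewrite Rmax_left by lra. apply rect_int_degen_x.
    - rewrite Rmax_right by lra. apply Hoff; lra. }
  assert (Hr : rect_int g q x1 y0 y1 = RtoC 0).
  { unfold q. destruct (Rle_dec x1 (a + s)).
    - rewrite Rmin_left by lra. apply rect_int_degen_x.
    - rewrite Rmin_right by lra. apply Hoff; lra. }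
  rewrite Hl, Hr. ring.
Qed.

Lemma rect_int_clamp_y b s x0 x1 y0 y1 :
  (forall u v, u <= v -> v < b \/ b < u -> rect_int g x0 x1 u v = RtoC 0) ->
  y0 <= b <= y1 -> 0 < s ->
  rect_int g x0 x1 y0 y1 = rect_int g x0 x1 (Rmax y0 (b - s)) (Rmin y1 (b + s)).
Proof.
  intros Hoff Hb Hs.
  set (p := Rmax y0 (b - s)). set (q := Rmin y1 (b + s)).
  rewrite (rect_int_split_y g g_cont x0 x1 y0 p), (rect_int_split_y g g_cont x0 x1 p q y1).
  assert (Hl : rect_int g x0 x1 y0 p = RtoC 0).
  { unfold p. destruct (Rle_dec (b - s) y0).
    - rewrite Rmax_left by lra. apply rect_int_degen_y.
    - rewrite Rmax_right by lra. apply Hoff; lra. }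
  assert (Hr : rect_int g x0 x1 q y1 = RtoC 0).
  { unfold q. destruct (Rle_dec y1 (b + s)).
    - rewrite Rmin_left by lra. apply rect_int_degen_y.
    - rewrite Rmin_right by lra. apply Hoff; lra. }
  rewrite Hl, Hr. ring.
Qed.

Lemma goursat_punctured_ordered z x0 x1 y0 y1 :
  (forall w, w <> z -> exists l, is_Cderive g w l) -> x0 <= x1 -> y0 <= y1 ->
  rect_int g x0 x1 y0 y1 = RtoC 0.
Proof.
  intros Hhol Hx Hy. destruct z as [a b].
  destruct (Rlt_dec x1 a); [apply (rect_int_avoiding g (a, b)); simpl; auto|].
  destruct (Rlt_dec a x0); [apply (rect_int_avoiding g (a, b)); simpl; auto|].
  destruct (Rlt_dec y1 b); [apply (rect_int_avoiding g (a, b)); simpl; auto|].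
  destruct (Rlt_dec b y0); [apply (rect_int_avoiding g (a, b)); simpl; auto|].
  destruct (g_cont (a, b) 1 Rlt_0_1) as [rho [Hrho Hc]].
  set (M := Cmod (g (a, b)) + 1).
  assert (HM : 0 <= M) by (unfold M; generalize (Cmod_ge_0 (g (a, b))); lra).
  apply Cmod_le_0, (le_eps_mult_0 _ (8 * M)); [lra|]. intros eps Heps.
  set (s := Rmin eps (rho / 4)).
  assert (Hs : 0 < s) by (apply Rmin_pos; lra).
  generalize (Rmin_l eps (rho / 4)) (Rmin_r eps (rho / 4)); fold s; intros Hs1 Hs2.
  generalize (Rmax_l x0 (a - s)) (Rmax_r x0 (a - s)) (Rmin_l x1 (a + s)) (Rmin_r x1 (a + s))
    (Rmax_l y0 (b - s)) (Rmax_r y0 (b - s)) (Rmin_l y1 (b + s)) (Rmin_r y1 (b + s)); intros.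
  assert (Hpq : Rmax x0 (a - s) <= Rmin x1 (a + s)) by (apply Rmax_lub; apply Rmin_glb; lra).
  assert (Hpq' : Rmax y0 (b - s) <= Rmin y1 (b + s)) by (apply Rmax_lub; apply Rmin_glb; lra).
  rewrite (rect_int_clamp_x a s), (rect_int_clamp_y b s); try lra.
  2: { intros u v Huv Hb. apply (rect_int_avoiding g (a, b)); simpl; auto; lra. }
  2: { intros u v Huv Ha. apply (rect_int_avoiding g (a, b)); simpl; auto; lra. }
  eapply Rle_trans; [apply (rect_int_bound g g_cont _ _ _ _ M)|]; try lra.
  - intros w Hw1 Hw2.
    assert (Hw : Cmod (w - (a, b)) < rho).
    { eapply Rle_lt_trans; [apply Cmod_le_abs_sum|]. destruct w as [w1 w2]; simpl in *.
      assert (Rabs (w1 + - a) <= s) by (apply Rabs_le; lra).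
      assert (Rabs (w2 + - b) <= s) by (apply Rabs_le; lra). lra. }
    specialize (Hc w Hw). unfold M.
    replace (g w) with ((g w - g (a, b)) + g (a, b))%C by ring.
    eapply Rle_trans; [apply Cmod_triangle|lra].
  - assert (s * M <= eps * M) by (apply Rmult_le_compat_r; lra). nra.
Qed.

Lemma goursat_punctured z x0 x1 y0 y1 :
  (forall w, w <> z -> exists l, is_Cderive g w l) -> rect_int g x0 x1 y0 y1 = RtoC 0.
Proof.
  intros Hhol.
  destruct (Rle_dec x0 x1), (Rle_dec y0 y1).
  - eapply goursat_punctured_ordered; eauto.
  - rewrite (rect_int_swap_y g g_cont x0 x1 y1 y0), (goursat_punctured_ordered z); auto; [ring|lra].
  - rewrite (rect_int_swap_x g g_cont x1 x0 y0 y1), (goursat_punctured_ordered z); auto; [ring|lra].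
  - rewrite (rect_int_swap_x g g_cont x1 x0 y0 y1), (rect_int_swap_y g g_cont x1 x0 y1 y0),
      (goursat_punctured_ordered z); auto; [ring|lra|lra].
Qed.

End Punctured.

Definition primitive (g : C -> C) (w : C) : C :=
  (hseg g 0 0 (fst w) + Ci * vseg g (fst w) 0 (snd w))%C.

Lemma primitive_sub g x y x' y' : Ccont g -> (forall x0 x1 y0 y1, rect_int g x0 x1 y0 y1 = RtoC 0) ->
  (primitive g (x', y') - primitive g (x, y) = hseg g y x x' + Ci * vseg g x' y y')%C.
Proof.
  intros Hg HR. unfold primitive; simpl fst; simpl snd.
  assert (C1 : hseg g 0 0 x' = (hseg g 0 0 x + hseg g 0 x x')%C)
    by (unfold hseg; rewrite CInt_Chasles; auto using Rcont_hline).
  assert (C2 : vseg g x' 0 y' = (vseg g x' 0 y + vseg g x' y y')%C)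
    by (unfold vseg; rewrite CInt_Chasles; auto using Rcont_vline).
  assert (Hh : hseg g y x x'
               = (hseg g 0 x x' + Ci * vseg g x' 0 y - Ci * vseg g x 0 y - rect_int g x x' 0 y)%C)
    by (unfold rect_int; ring).
  rewrite C1, C2, Hh, HR. ring.
Qed.

Lemma CInt_sub_const_bound phi c a b eta : Rcont phi ->
  (forall t, Rmin a b <= t <= Rmax a b -> Cmod (phi t - c) <= eta) ->
  Cmod (CInt phi a b - RtoC (b - a) * c) <= Rabs (b - a) * eta.
Proof.
  intros Hphi H. rewrite <- CInt_const, <- CInt_minus by auto using Rcont_const.
  apply CInt_bound_abs; auto. apply Rcont_minus; auto using Rcont_const.
Qed.

Lemma Rabs_sub_le_between a b t : Rmin a b <= t <= Rmax a b -> Rabs (t - a) <= Rabs (b - a).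
Proof.
  intros Ht. destruct (Rle_dec a b).
  - rewrite Rmin_left, Rmax_right in Ht by lra. rewrite !Rabs_pos_eq; lra.
  - rewrite Rmin_right, Rmax_left in Ht by lra. rewrite !Rabs_left1; lra.
Qed.

Lemma is_Cderive_primitive g w : Ccont g ->
  (forall x0 x1 y0 y1, rect_int g x0 x1 y0 y1 = RtoC 0) -> is_Cderive (primitive g) w (g w).
Proof.
  intros Hg HR. destruct w as [x y]. intros eps He.
  destruct (Hg (x, y) (eps / 2) ltac:(lra)) as [rho [Hrho Hc]].
  exists (rho / 2). split; [lra|].
  intros [x' y'] Hw'. set (m := Cmod ((x', y') - (x, y))) in *.
  assert (Hxx : Rabs (x' - x) <= m) by
    (replace (x' - x) with (fst ((x', y') - (x, y))%C) by (simpl; ring); apply re_le_Cmod).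
  assert (Hyy : Rabs (y' - y) <= m) by
    (replace (y' - y) with (snd ((x', y') - (x, y))%C) by (simpl; ring); apply im_le_Cmod).
  assert (E : ((x', y') - (x, y) = RtoC (x' - x) + Ci * RtoC (y' - y))%C)
    by (rewrite !C_decomp, !RtoC_minus; ring).
  rewrite primitive_sub by auto. fold m. rewrite E.
  replace (hseg g y x x' + Ci * vseg g x' y y' - g (x, y) * (RtoC (x' - x) + Ci * RtoC (y' - y)))%C
    with ((hseg g y x x' - RtoC (x' - x) * g (x, y))
          + Ci * (vseg g x' y y' - RtoC (y' - y) * g (x, y)))%C by ring.
  eapply Rle_trans; [apply Cmod_triangle|]. rewrite Cmod_mult, Cmod_Ci, Rmult_1_l.
  assert (B1 : Cmod (hseg g y x x' - RtoC (x' - x) * g (x, y)) <= Rabs (x' - x) * (eps / 2)).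
  { apply CInt_sub_const_bound; [now apply Rcont_hline|]. intros t Ht. left. apply Hc.
    replace ((t, y) - (x, y))%C with (RtoC (t - x))
      by (unfold RtoC, Cminus, Cplus, Copp; simpl; f_equal; ring).
    rewrite Cmod_R. generalize (Rabs_sub_le_between x x' t Ht). lra. }
  assert (B2 : Cmod (vseg g x' y y' - RtoC (y' - y) * g (x, y)) <= Rabs (y' - y) * (eps / 2)).
  { apply CInt_sub_const_bound; [now apply Rcont_vline|]. intros t Ht. left. apply Hc.
    eapply Rle_lt_trans; [apply Cmod_le_abs_sum|]. simpl.
    generalize (Rabs_sub_le_between y y' t Ht).
    replace (x' + - x) with (x' - x) by ring. replace (t + - y) with (t - y) by ring. lra. }
  nra.
Qed.

Lemma cauchy_circle g z r : 0 < r -> Ccont g ->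
  (forall w, w <> z -> exists l, is_Cderive g w l) ->
  CInt (fun t => g (circle r t) * circle r t)%C 0 (2 * PI) = RtoC 0.
Proof.
  intros Hr Hg Hhol.
  assert (HR : forall x0 x1 y0 y1, rect_int g x0 x1 y0 y1 = RtoC 0)
    by (intros; eapply goursat_punctured; eauto).
  assert (Hc : Rcont (fun t => g (circle r t))) by now apply Rcont_circle_Ccont.
  generalize (CInt_circle_derive r (primitive g) g (fun t => is_Cderive_primitive g _ Hg HR) Hc).
  rewrite (CInt_ext _ (fun t => Ci * (g (circle r t) * circle r t))%C) by (intros; ring).
  rewrite CInt_scal by (apply Rcont_mult; auto using Rcont_circle).
  intros H. replace (CInt _ 0 (2 * PI)) with (/ Ci * (Ci * CInt (fun t => g (circle r t) * circle r t) 0 (2 * PI)))%C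
    by (field; apply Ci_nz).
  rewrite H. ring.
Qed.

Fixpoint csum (F : nat -> C) (N : nat) : C :=
  match N with O => RtoC 0 | S n => (csum F n + F n)%C end.

Lemma csum_ext F G N : (forall k, F k = G k) -> csum F N = csum G N.
Proof. intros H. induction N; simpl; auto. now rewrite IHN, H. Qed.

Lemma csum_scal c F N : (c * csum F N = csum (fun k => c * F k) N)%C.
Proof. induction N; simpl; [ring|]. rewrite <- IHN. ring. Qed.

Lemma Rcont_csum (F : nat -> R -> C) N :
  (forall k, Rcont (F k)) -> Rcont (fun t => csum (fun k => F k t) N).
Proof.
  intros H. induction N; simpl; [apply Rcont_const|]. now apply Rcont_plus.
Qed.

Lemma CInt_csum (F : nat -> R -> C) N a b : (forall k, Rcont (F k)) ->
  CInt (fun t => csum (fun k => F k t) N) a b = csum (fun k => CInt (F k) a b) N.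
Proof.
  intros H. induction N; simpl.
  - rewrite CInt_const. ring.
  - rewrite CInt_plus, IHN; auto. now apply Rcont_csum.
Qed.

Lemma cauchy_kernel_geometric (u z : C) N : u <> RtoC 0 -> (u - z)%C <> RtoC 0 ->
  (u / (u - z) = csum (fun k => z ^ k * (/ u) ^ k) N + (z * / u) ^ N * (u / (u - z)))%C.
Proof.
  intros Hu Huz. assert (HK : (u / (u - z) = 1 + z * / u * (u / (u - z)))%C) by (field; auto).
  set (K := (u / (u - z))%C) in *. induction N; [simpl; ring|].
  rewrite IHN at 1. simpl. rewrite !Cpow_mult_l. rewrite HK at 1. ring.
Qed.

Lemma le_of_le_geometric a b K q : 0 <= q < 1 -> (forall N, a <= b + K * q ^ N) -> a <= b.
Proof.
  intros Hq H. destruct (Rle_dec a b) as [|Hab]; auto. exfalso.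
  destruct (Rle_dec K 0) as [HK|HK]; [specialize (H 0%nat); simpl in H; lra|].
  destruct (pow_lt_1_zero q ltac:(rewrite Rabs_pos_eq; lra) ((a - b) / K)) as [N HN];
    [apply Rdiv_lt_0_compat; lra|].
  specialize (HN N (le_n N)). specialize (H N). rewrite Rabs_pos_eq in HN by (apply pow_le; lra).
  apply (Rmult_lt_compat_l K) in HN; [|lra].
  replace (K * ((a - b) / K)) with (a - b) in HN by (field; lra). lra.
Qed.

Lemma div_lt_1 x r : 0 <= x < r -> 0 <= x / r < 1.
Proof.
  intros H. split; [apply Rdiv_le_0_compat; lra|].
  apply (Rmult_lt_reg_r r); [lra|]. unfold Rdiv. rewrite Rmult_assoc, Rinv_l; lra.
Qed.

Section CauchyKernel.

Variables (r : R) (z : C).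
Hypothesis r_pos : 0 < r.
Hypothesis z_in : Cmod z < r.

Let kernel_rem phi N t := (phi t * ((z * / circle r t) ^ N * (circle r t / (circle r t - z))))%C.

Lemma CInt_cauchy_kernel_expand (phi : R -> C) N : Rcont phi ->
  CInt (fun t => phi t * (circle r t / (circle r t - z)))%C 0 (2 * PI) =
  (csum (fun k => z ^ k * CInt (fun t => phi t * (/ circle r t) ^ k) 0 (2 * PI)) N +
   CInt (kernel_rem phi N) 0 (2 * PI))%C.
Proof.
  intros Hphi.
  assert (Hk : forall k, Rcont (fun t => z ^ k * (phi t * (/ circle r t) ^ k))%C).
  { intros k. apply Rcont_mult; [apply Rcont_const|]. apply Rcont_mult; auto.
    apply Rcont_pow. now apply Rcont_circle_inv. }
  assert (HR : Rcont (kernel_rem phi N)).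
  { unfold kernel_rem. apply Rcont_mult; auto. apply Rcont_mult; [|now apply Rcont_cauchy_kernel].
    apply Rcont_pow, Rcont_mult; [apply Rcont_const|now apply Rcont_circle_inv]. }
  rewrite (CInt_ext _ (fun t => csum (fun k => z ^ k * (phi t * (/ circle r t) ^ k)) N
                                + kernel_rem phi N t)%C).
  - rewrite CInt_plus, CInt_csum; auto using Rcont_csum. f_equal.
    apply csum_ext. intros k. apply CInt_scal.
    apply Rcont_mult; auto. apply Rcont_pow. now apply Rcont_circle_inv.
  - intros t _. unfold kernel_rem.
    rewrite (cauchy_kernel_geometric (circle r t) z N) at 1
      by (auto using circle_neq0, circle_sub_neq0).
    rewrite Cmult_plus_distr_l, csum_scal. f_equal. apply csum_ext. intros k. ring.
Qed.

Lemma CInt_kernel_rem_bound (phi : R -> C) N M : Rcont phi ->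
  (forall t, 0 <= t <= 2 * PI -> Cmod (phi t) <= M) ->
  Cmod (CInt (kernel_rem phi N) 0 (2 * PI)) <= 2 * PI * (M * (r / (r - Cmod z))) * (Cmod z / r) ^ N.
Proof.
  intros Hphi HM.
  assert (HPI : 0 < PI) by apply PI_RGT_0.
  apply Rle_trans with ((2 * PI - 0) * (M * (r / (r - Cmod z)) * (Cmod z / r) ^ N)); [|right; ring].
  apply CInt_bound; [lra| |].
  - unfold kernel_rem. apply Rcont_mult; auto. apply Rcont_mult; [|now apply Rcont_cauchy_kernel].
    apply Rcont_pow, Rcont_mult; [apply Rcont_const|now apply Rcont_circle_inv].
  - intros t Ht. unfold kernel_rem.
    rewrite !Cmod_mult, Cmod_pow, Cmod_mult, Cmod_inv, Cmod_div, Cmod_circle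
      by (auto using circle_neq0, circle_sub_neq0; lra).
    assert (0 <= M) by (generalize (HM t Ht) (Cmod_ge_0 (phi t)); lra).
    generalize (circle_sub_bound r t z ltac:(lra)). intros Hb.
    assert (Hp : 0 <= (Cmod z * / r) ^ N)
      by (apply pow_le, Rmult_le_pos; [apply Cmod_ge_0|left; apply Rinv_0_lt_compat; auto]).
    change (Cmod z / r) with (Cmod z * / r).
    assert (r / Cmod (circle r t - z) <= r / (r - Cmod z))
      by (apply Rmult_le_compat_l; [lra|apply Rinv_le_contravar; lra]).
    assert (0 <= r / Cmod (circle r t - z)) by (apply Rdiv_le_0_compat; lra).
    assert (Cmod (phi t) * ((Cmod z * / r) ^ N * (r / Cmod (circle r t - z)))
            <= M * ((Cmod z * / r) ^ N * (r / (r - Cmod z)))).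
    { apply Rmult_le_compat; auto using Cmod_ge_0. apply Rmult_le_pos; auto.
      apply Rmult_le_compat_l; auto. }
    lra.
Qed.

Lemma CInt_cauchy_kernel :
  CInt (fun t => circle r t / (circle r t - z))%C 0 (2 * PI) = RtoC (2 * PI).
Proof.
  assert (HPI : 0 < PI) by apply PI_RGT_0.
  apply Ceq_minus, Cmod_le_0.
  apply (le_of_le_geometric _ 0 (2 * PI * (1 * (r / (r - Cmod z))) * (Cmod z / r)) (Cmod z / r));
    [apply div_lt_1; generalize (Cmod_ge_0 z); lra|].
  intros N.
  rewrite (CInt_ext _ (fun t => RtoC 1 * (circle r t / (circle r t - z)))%C) by (intros; ring).
  rewrite (CInt_cauchy_kernel_expand (fun _ => RtoC 1) (S N)) by apply Rcont_const.
  assert (Hfirst : forall n : nat,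
    csum (fun k => z ^ k * CInt (fun t => RtoC 1 * (/ circle r t) ^ k) 0 (2 * PI))%C (S n)
    = RtoC (2 * PI)).
  { induction n; cbn [csum].
    - rewrite (CInt_ext _ (fun _ => RtoC 1)) by (intros; simpl; ring). rewrite CInt_const. ring_simplify.
      now rewrite Rminus_0_r.
    - cbn [csum] in IHn. rewrite IHn.
      rewrite (CInt_ext _ (fun t => (/ circle r t) ^ S n)%C) by (intros; ring).
      rewrite CInt_circle_inv_pow by (auto; lia). ring. }
  rewrite Hfirst. replace (RtoC (2 * PI) + _ - RtoC (2 * PI))%C
    with (CInt (kernel_rem (fun _ => RtoC 1) (S N)) 0 (2 * PI)) by ring.
  eapply Rle_trans; [apply CInt_kernel_rem_bound; [apply Rcont_const|]|].
  - intros t _. rewrite Cmod_1. apply Rle_refl.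
  - simpl pow. lra.
Qed.

End CauchyKernel.

Definition slope (f : C -> C) (z w : C) : C :=
  if Ceq_dec w z then Cderiv f z else ((f w - f z) / (w - z))%C.

Lemma slope_is_Cderive f z w : holomorphic f -> w <> z -> exists l, is_Cderive (slope f z) w l.
Proof.
  intros Hf Hw.
  assert (Hwz : (w - z)%C <> RtoC 0) by (intro E; apply Hw; now apply Ceq_minus).
  destruct (Hf w) as [a Ha].
  eexists. apply (is_Cderive_ext_loc (fun v => (f v - f z) * / (v - z))%C _ _ _ (Cmod (w - z))).
  - now apply Cmod_gt_0.
  - intros v Hv. unfold slope. destruct (Ceq_dec v z) as [E|E]; auto.
    subst. rewrite Cmod_minus_sym in Hv. lra.
  - apply is_Cderive_mult; [apply is_Cderive_minus; [exact Ha|apply is_Cderive_const]|].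
    apply (is_Cderive_comp (fun u => / u)%C (fun v => v - z)%C); [now apply is_Cderive_inv|].
    apply is_Cderive_minus; [apply is_Cderive_id|apply is_Cderive_const].
Qed.

Lemma slope_Ccont f z : holomorphic f -> Ccont (slope f z).
Proof.
  intros Hf w. destruct (Ceq_dec w z) as [->|E].
  - intros eps He. destruct (holomorphic_is_Cderive f z Hf (eps / 2) ltac:(lra)) as [d [Hd H]].
    exists d; split; auto. intros v Hv. unfold slope.
    destruct (Ceq_dec z z) as [_|C]; [|congruence].
    destruct (Ceq_dec v z) as [E|E].
    + replace (Cderiv f z - Cderiv f z)%C with (RtoC 0) by ring. rewrite Cmod_0; auto.
    + assert (Hvz : (v - z)%C <> RtoC 0) by (intro E'; apply E; now apply Ceq_minus).
      assert (Hp : 0 < Cmod (v - z)) by now apply Cmod_gt_0.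
      replace ((f v - f z) / (v - z) - Cderiv f z)%C
        with ((f v - f z - Cderiv f z * (v - z)) / (v - z))%C by (field; auto).
      rewrite Cmod_div by auto. specialize (H v Hv).
      apply Rle_lt_trans with (eps / 2); [|lra].
      apply (Rmult_le_reg_r (Cmod (v - z))); auto.
      unfold Rdiv. rewrite Rmult_assoc, Rinv_l by lra. lra.
  - destruct (slope_is_Cderive f z w Hf E) as [l Hl]. eapply is_Cderive_cont_at; eauto.
Qed.

Lemma cauchy_formula f r z : holomorphic f -> 0 < r -> Cmod z < r ->
  CInt (fun t => f (circle r t) * (circle r t / (circle r t - z)))%C 0 (2 * PI) = (RtoC (2 * PI) * f z)%C.
Proof.
  intros Hf Hr Hz.
  generalize (cauchy_circle (slope f z) z r Hr (slope_Ccont f z Hf) (fun w Hw => slope_is_Cderive f z w Hf Hw)).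
  rewrite (CInt_ext _ (fun t => f (circle r t) * (circle r t / (circle r t - z))
                                - f z * (circle r t / (circle r t - z)))%C).
  2:{ intros t _. unfold slope. destruct (Ceq_dec (circle r t) z) as [E|E].
      - exfalso. apply (circle_sub_neq0 r t z Hz). rewrite E. ring.
      - field. now apply circle_sub_neq0. }
  assert (Hk := Rcont_cauchy_kernel r z Hz).
  assert (Hfk : Rcont (fun t => f (circle r t) * (circle r t / (circle r t - z)))%C).
  { apply Rcont_mult; auto. apply Rcont_circle_Ccont. now apply holomorphic_Ccont. }
  rewrite CInt_minus, CInt_scal, CInt_cauchy_kernel; auto.
  - intros H. apply Ceq_minus. rewrite <- H. ring.
  - apply Rcont_mult; auto using Rcont_const.
Qed.

(** * Derivatives of all orders, Cauchy estimates and Taylor expansion *)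

Definition pow_rem m (u v : C) : C := (u ^ m - v ^ m - RtoC (INR m) * v ^ (pred m) * (u - v))%C.

Lemma pow_rem_bound m B : 0 <= B -> exists K, 0 <= K /\ forall u v, Cmod u <= B -> Cmod v <= B ->
  Cmod (pow_rem m u v) <= K * (Cmod (u - v) * Cmod (u - v)).
Proof.
  intros HB. induction m.
  - exists 0. split; [lra|]. intros u v _ _. unfold pow_rem. simpl.
    replace (1 - 1 - RtoC 0 * 1 * (u - v))%C with (RtoC 0) by ring. rewrite Cmod_0. lra.
  - destruct IHm as [K [HK H]]. exists (B * K + INR m * B ^ (pred m)). split.
    { apply Rplus_le_le_0_compat; [nra|]. apply Rmult_le_pos; [apply pos_INR|apply pow_le; auto]. }
    intros u v Hu Hv.
    replace (pow_rem (S m) u v)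
      with (u * pow_rem m u v + RtoC (INR m) * v ^ (pred m) * ((u - v) * (u - v)))%C
      by (unfold pow_rem; rewrite S_INR, RtoC_plus; destruct m; simpl; ring).
    eapply Rle_trans; [apply Cmod_triangle|].
    rewrite !Cmod_mult, Cmod_pow, Cmod_R, Rabs_pos_eq by apply pos_INR.
    specialize (H u v Hu Hv).
    assert (0 <= Cmod (u - v) * Cmod (u - v)) by (apply Rmult_le_pos; apply Cmod_ge_0).
    assert (Cmod u * Cmod (pow_rem m u v) <= B * (K * (Cmod (u - v) * Cmod (u - v))))
      by (apply Rmult_le_compat; auto using Cmod_ge_0).
    assert (INR m * Cmod v ^ pred m <= INR m * B ^ pred m)
      by (apply Rmult_le_compat_l; [apply pos_INR|apply pow_incr; split; auto using Cmod_ge_0]).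
    assert (INR m * Cmod v ^ pred m * (Cmod (u - v) * Cmod (u - v))
            <= INR m * B ^ pred m * (Cmod (u - v) * Cmod (u - v)))
      by (apply Rmult_le_compat_r; auto).
    nra.
Qed.

(* Applied to [U = 1/(u - w)] and [V = 1/(u - z)], for which [U - V = (w - z) U V]. *)
Lemma pow_second_order_bound m B : 0 <= B -> exists K, 0 <= K /\ forall U V h,
  Cmod U <= B -> Cmod V <= B -> (U - V = h * U * V)%C ->
  Cmod (U ^ m - V ^ m - RtoC (INR m) * h * V ^ (S m)) <= K * (Cmod h * Cmod h).
Proof.
  intros HB. destruct (pow_rem_bound m B HB) as [K [HK HKb]].
  exists (K * B ^ 4 + INR m * B ^ (m + 2)). split.
  { apply Rplus_le_le_0_compat; apply Rmult_le_pos; auto using pos_INR, pow_le. }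
  intros U V h HU HV HUV.
  assert (HUVb : Cmod (U - V) <= Cmod h * (B * B)).
  { rewrite HUV, !Cmod_mult, Rmult_assoc. apply Rmult_le_compat_l; [apply Cmod_ge_0|].
    apply Rmult_le_compat; auto using Cmod_ge_0. }
  replace (U ^ m - V ^ m - RtoC (INR m) * h * V ^ S m)%C
    with (pow_rem m U V + RtoC (INR m) * h * V ^ m * (U - V))%C.
  2:{ unfold pow_rem. destruct m; [simpl; ring|]. simpl pred. rewrite HUV at 1. simpl. ring. }
  eapply Rle_trans; [apply Cmod_triangle|].
  rewrite !Cmod_mult, Cmod_pow, Cmod_R, Rabs_pos_eq by apply pos_INR.
  assert (0 <= Cmod h) by apply Cmod_ge_0.
  assert (E1 : K * (Cmod (U - V) * Cmod (U - V)) <= K * B ^ 4 * (Cmod h * Cmod h)).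
  { replace (K * B ^ 4 * (Cmod h * Cmod h)) with (K * ((Cmod h * (B * B)) * (Cmod h * (B * B))))
      by ring.
    apply Rmult_le_compat_l; auto. apply Rmult_le_compat; auto using Cmod_ge_0. }
  assert (E2 : INR m * Cmod h * Cmod V ^ m * Cmod (U - V) <= INR m * B ^ (m + 2) * (Cmod h * Cmod h)).
  { rewrite pow_add.
    replace (INR m * (B ^ m * B ^ 2) * (Cmod h * Cmod h))
      with ((INR m * Cmod h * B ^ m) * (Cmod h * (B * B))) by ring.
    apply Rmult_le_compat; auto using Cmod_ge_0.
    - apply Rmult_le_pos; [apply Rmult_le_pos; auto using pos_INR|apply pow_le, Cmod_ge_0].
    - apply Rmult_le_compat_l; [apply Rmult_le_pos; auto using pos_INR|].
      apply pow_incr. split; auto using Cmod_ge_0. }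
  generalize (HKb U V HU HV). lra.
Qed.

Definition cauchy_transform (F : R -> C) r m (z : C) : C :=
  CInt (fun t => F t * (/ (circle r t - z)) ^ m)%C 0 (2 * PI).

Lemma Rcont_cauchy_integrand F r m w : Rcont F -> Cmod w < r ->
  Rcont (fun t => F t * (/ (circle r t - w)) ^ m)%C.
Proof. intros HF Hw. apply Rcont_mult; auto. apply Rcont_pow. now apply Rcont_circle_inv_sub. Qed.

Lemma cauchy_kernel_pow_second_order r z m : Cmod z < r -> exists K, 0 <= K /\ forall w t,
  Cmod (w - z) < (r - Cmod z) / 2 ->
  Cmod ((/ (circle r t - w)) ^ m - (/ (circle r t - z)) ^ m
        - RtoC (INR m) * (w - z) * (/ (circle r t - z)) ^ S m) <= K * (Cmod (w - z) * Cmod (w - z)).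
Proof.
  intros Hz.
  assert (Hr0 : 0 <= r) by (generalize (Cmod_ge_0 z); lra).
  set (d0 := r - Cmod z). assert (Hd0 : 0 < d0) by (unfold d0; lra).
  destruct (pow_second_order_bound m (2 / d0)) as [K [HK HKb]]; [apply Rlt_le, Rdiv_lt_0_compat; lra|].
  exists K. split; auto. intros w t Hw.
  assert (Hwr : Cmod w <= Cmod z + Cmod (w - z))
    by (replace w with (z + (w - z))%C at 1 by ring; apply Cmod_triangle).
  assert (Huz : d0 <= Cmod (circle r t - z)) by (apply circle_sub_bound; lra).
  assert (Huw : d0 / 2 <= Cmod (circle r t - w))
    by (generalize (circle_sub_bound r t w Hr0); unfold d0 in *; lra).
  assert (Nuz : (circle r t - z)%C <> RtoC 0) by (intro E; rewrite E, Cmod_0 in Huz; lra).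
  assert (Nuw : (circle r t - w)%C <> RtoC 0) by (intro E; rewrite E, Cmod_0 in Huw; lra).
  apply HKb.
  - rewrite Cmod_inv by auto. replace (2 / d0) with (/ (d0 / 2)) by (field; lra).
    apply Rinv_le_contravar; lra.
  - rewrite Cmod_inv by auto. apply Rle_trans with (/ d0); [apply Rinv_le_contravar; lra|].
    assert (0 < / d0) by (apply Rinv_0_lt_compat; lra). unfold Rdiv. lra.
  - field. auto.
Qed.

Lemma is_Cderive_cauchy_transform F r m z : Rcont F -> Cmod z < r ->
  is_Cderive (cauchy_transform F r m) z (RtoC (INR m) * cauchy_transform F r (S m) z)%C.
Proof.
  intros HF Hz eps He.
  assert (HPI : 0 < PI) by apply PI_RGT_0.
  destruct (Rcont_bounded F 0 (2 * PI) ltac:(lra) HF) as [MF [HMF HMF']].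
  destruct (cauchy_kernel_pow_second_order r z m Hz) as [K [HK HKb]].
  set (Cst := 2 * PI * (MF * K)).
  assert (HCst : 0 <= Cst) by (unfold Cst; apply Rmult_le_pos; [lra|now apply Rmult_le_pos]).
  exists (Rmin ((r - Cmod z) / 2) (eps / (Cst + 1))).
  split; [apply Rmin_pos; apply Rdiv_lt_0_compat; lra|].
  intros w Hw.
  generalize (Rmin_l ((r - Cmod z) / 2) (eps / (Cst + 1)))
    (Rmin_r ((r - Cmod z) / 2) (eps / (Cst + 1))); intros Hmin1 Hmin2.
  assert (Hwr : Cmod w < r).
  { replace w with (z + (w - z))%C by ring.
    eapply Rle_lt_trans; [apply Cmod_triangle|lra]. }
  set (h := (w - z)%C) in *.
  generalize (Rcont_cauchy_integrand F r m w HF Hwr) (Rcont_cauchy_integrand F r m z HF Hz)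
    (Rcont_cauchy_integrand F r (S m) z HF Hz); intros Iw Iz Iz'.
  assert (Iz'' := Rcont_mult _ _ (Rcont_const (h * RtoC (INR m))) Iz').
  assert (Id := Rcont_minus _ _ Iw Iz).
  unfold cauchy_transform.
  rewrite <- CInt_minus by auto.
  rewrite (Cmult_comm _ h), Cmult_assoc, <- CInt_scal, <- CInt_minus by auto.
  apply Rle_trans with ((2 * PI - 0) * (MF * (K * (Cmod h * Cmod h)))).
  - apply CInt_bound; [lra|now apply Rcont_minus|]. intros t Ht.
    replace (F t * (/ (circle r t - w)) ^ m - F t * (/ (circle r t - z)) ^ m
             - h * RtoC (INR m) * (F t * (/ (circle r t - z)) ^ S m))%C
      with (F t * ((/ (circle r t - w)) ^ m - (/ (circle r t - z)) ^ m
                   - RtoC (INR m) * h * (/ (circle r t - z)) ^ S m))%C by ring.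
    rewrite Cmod_mult. apply Rmult_le_compat; auto using Cmod_ge_0.
    apply HKb. exact (Rlt_le_trans _ _ _ Hw Hmin1).
  - assert (0 <= Cmod h) by apply Cmod_ge_0.
    replace ((2 * PI - 0) * (MF * (K * (Cmod h * Cmod h)))) with (Cst * Cmod h * Cmod h)
      by (unfold Cst; ring).
    apply Rmult_le_compat_r; auto.
    apply Rle_trans with ((Cst + 1) * (eps / (Cst + 1))); [|right; field; lra].
    apply Rmult_le_compat; lra.
Qed.

Definition cauchy_density (f : C -> C) r (t : R) : C :=
  (f (circle r t) * circle r t * RtoC (/ (2 * PI)))%C.

Lemma Rcont_cauchy_density f r : holomorphic f -> Rcont (cauchy_density f r).
Proof.
  intros Hf. unfold cauchy_density. repeat apply Rcont_mult; auto using Rcont_const, Rcont_circle.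
  apply Rcont_circle_Ccont. now apply holomorphic_Ccont.
Qed.

Lemma cauchy_transform_density f r z : holomorphic f -> 0 < r -> Cmod z < r ->
  cauchy_transform (cauchy_density f r) r 1 z = f z.
Proof.
  intros Hf Hr Hz. unfold cauchy_transform.
  rewrite (CInt_ext _ (fun t => RtoC (/ (2 * PI)) * (f (circle r t) * (circle r t / (circle r t - z))))%C)
    by (intros t _; unfold cauchy_density; simpl; unfold Cdiv; ring).
  rewrite CInt_scal, cauchy_formula; auto.
  - rewrite Cmult_assoc, <- RtoC_mult, Rinv_l; [ring|]. generalize PI_RGT_0; lra.
  - apply Rcont_mult; [|now apply Rcont_cauchy_kernel].
    apply Rcont_circle_Ccont. now apply holomorphic_Ccont.
Qed.

Lemma Cderiv_n_cauchy_transform f r k : holomorphic f -> 0 < r -> forall z, Cmod z < r ->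
  Cderiv_n k f z = (RtoC (INR (fact k)) * cauchy_transform (cauchy_density f r) r (S k) z)%C.
Proof.
  intros Hf Hr. induction k; intros z Hz.
  - simpl. rewrite cauchy_transform_density; auto. ring.
  - change (Cderiv_n (S k) f z) with (Cderiv (Cderiv_n k f) z).
    apply Cderiv_unique.
    apply (is_Cderive_ext_loc
             (fun w => RtoC (INR (fact k)) * cauchy_transform (cauchy_density f r) r (S k) w)%C
             _ _ _ (r - Cmod z)); [lra| |].
    + intros w Hw. rewrite IHk; auto.
      replace w with (z + (w - z))%C by ring. eapply Rle_lt_trans; [apply Cmod_triangle|lra].
    + replace (RtoC (INR (fact (S k))) * cauchy_transform (cauchy_density f r) r (S (S k)) z)%C
        with (RtoC (INR (fact k)) * (RtoC (INR (S k))
              * cauchy_transform (cauchy_density f r) r (S (S k)) z))%C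
        by (rewrite fact_simpl, mult_INR, RtoC_mult; ring).
      apply is_Cderive_scal, is_Cderive_cauchy_transform; auto. now apply Rcont_cauchy_density.
Qed.

Lemma is_Cderive_Cderiv_n f k z : holomorphic f -> is_Cderive (Cderiv_n k f) z (Cderiv_n (S k) f z).
Proof.
  intros Hf. set (r := Cmod z + 1).
  assert (Hz : Cmod z < r) by (unfold r; lra).
  assert (Hr : 0 < r) by (generalize (Cmod_ge_0 z); lra).
  rewrite (Cderiv_n_cauchy_transform f r (S k)) by auto.
  apply (is_Cderive_ext_loc
           (fun w => RtoC (INR (fact k)) * cauchy_transform (cauchy_density f r) r (S k) w)%C
           _ _ _ 1); [lra| |].
  - intros w Hw. rewrite (Cderiv_n_cauchy_transform f r k); auto.
    replace w with (z + (w - z))%C by ring. eapply Rle_lt_trans; [apply Cmod_triangle|unfold r; lra].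
  - replace (RtoC (INR (fact (S k))) * cauchy_transform (cauchy_density f r) r (S (S k)) z)%C
      with (RtoC (INR (fact k)) * (RtoC (INR (S k))
            * cauchy_transform (cauchy_density f r) r (S (S k)) z))%C
      by (rewrite fact_simpl, mult_INR, RtoC_mult; ring).
    apply is_Cderive_scal, is_Cderive_cauchy_transform; auto. now apply Rcont_cauchy_density.
Qed.

Definition deriv0 (k : nat) (f : C -> C) : C := Cderiv_n k f (0%R, 0%R).

Definition circle_coef (f : C -> C) r k : C :=
  (RtoC (/ (2 * PI)) * CInt (fun t => f (circle r t) * (/ circle r t) ^ k) 0 (2 * PI))%C.

Lemma Rcont_circle_coef_integrand f r k : holomorphic f -> 0 < r ->
  Rcont (fun t => f (circle r t) * (/ circle r t) ^ k)%C.
Proof.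
  intros Hf Hr. apply Rcont_mult; [|apply Rcont_pow; now apply Rcont_circle_inv].
  apply Rcont_circle_Ccont. now apply holomorphic_Ccont.
Qed.

Lemma INR_fact_pos k : 0 < INR (fact k).
Proof. apply lt_0_INR, lt_O_fact. Qed.

Lemma deriv0_circle_coef f r k : holomorphic f -> 0 < r ->
  deriv0 k f = (RtoC (INR (fact k)) * circle_coef f r k)%C.
Proof.
  intros Hf Hr. unfold deriv0. change (0%R, 0%R) with (RtoC 0).
  rewrite (Cderiv_n_cauchy_transform f r) by (rewrite ?Cmod_0; auto).
  f_equal. unfold cauchy_transform, circle_coef. rewrite <- CInt_scal.
  - apply CInt_ext. intros t _. unfold cauchy_density. generalize (circle_neq0 r t Hr). intros Hu.
    replace (circle r t - RtoC 0)%C with (circle r t) by ring. simpl. field. auto.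
  - now apply Rcont_circle_coef_integrand.
Qed.

Lemma circle_coef_of_deriv0 f r k : holomorphic f -> 0 < r ->
  circle_coef f r k = (deriv0 k f * RtoC (/ INR (fact k)))%C.
Proof.
  intros Hf Hr. rewrite (deriv0_circle_coef f r k Hf Hr).
  replace (RtoC (INR (fact k)) * circle_coef f r k * RtoC (/ INR (fact k)))%C
    with (circle_coef f r k * RtoC (INR (fact k) * / INR (fact k)))%C by (rewrite RtoC_mult; ring).
  rewrite Rinv_r by (generalize (INR_fact_pos k); lra). ring.
Qed.

Lemma deriv0_minus f g k : holomorphic f -> holomorphic g ->
  deriv0 k (Csub_fun g f) = (deriv0 k g - deriv0 k f)%C.
Proof.
  intros Hf Hg.
  rewrite !(deriv0_circle_coef _ 1) by (auto using holomorphic_minus; lra).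
  unfold circle_coef, Csub_fun.
  rewrite (CInt_ext _ (fun t => g (circle 1 t) * (/ circle 1 t) ^ k
                                - f (circle 1 t) * (/ circle 1 t) ^ k)%C) by (intros; ring).
  rewrite CInt_minus by (apply Rcont_circle_coef_integrand; auto; lra). ring.
Qed.

Lemma cauchy_estimate h r k d : holomorphic h -> 0 < r ->
  (forall t, Cmod (h (circle r t)) <= d) -> Cmod (deriv0 k h) <= INR (fact k) * d / r ^ k.
Proof.
  intros Hh Hr Hd. assert (HPI : 0 < PI) by apply PI_RGT_0.
  rewrite (deriv0_circle_coef _ r) by auto.
  rewrite Cmod_mult, Cmod_R, Rabs_pos_eq by (left; apply INR_fact_pos).
  unfold Rdiv. rewrite Rmult_assoc. apply Rmult_le_compat_l; [left; apply INR_fact_pos|].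
  unfold circle_coef. rewrite Cmod_mult, Cmod_R, Rabs_pos_eq by (left; apply Rinv_0_lt_compat; lra).
  apply Rle_trans with (/ (2 * PI) * ((2 * PI - 0) * (d * / r ^ k))).
  - apply Rmult_le_compat_l; [left; apply Rinv_0_lt_compat; lra|].
    apply CInt_bound; [lra|now apply Rcont_circle_coef_integrand|].
    intros t _. rewrite Cmod_mult, Cmod_pow, Cmod_inv, Cmod_circle by (auto using circle_neq0; lra).
    rewrite pow_inv. apply Rmult_le_compat_r; auto.
    left; apply Rinv_0_lt_compat, pow_lt; auto.
  - right. field. split; [apply pow_nonzero|]; lra.
Qed.

Lemma taylor_remainder_bound f r z N M : holomorphic f -> 0 < r -> Cmod z < r ->
  (forall t, 0 <= t <= 2 * PI -> Cmod (f (circle r t)) <= M) ->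
  Cmod (f z - csum (fun k => z ^ k * circle_coef f r k)%C N)
  <= M * (r / (r - Cmod z)) * (Cmod z / r) ^ N.
Proof.
  intros Hf Hr Hz HM. assert (HPI : 0 < PI) by apply PI_RGT_0.
  assert (Hphi : Rcont (fun t => f (circle r t)))
    by (apply Rcont_circle_Ccont; now apply holomorphic_Ccont).
  generalize (cauchy_formula f r z Hf Hr Hz).
  rewrite (CInt_cauchy_kernel_expand r z Hr Hz (fun t => f (circle r t)) N Hphi). intros HC.
  set (Rem := CInt _ 0 (2 * PI)) in HC.
  assert (E : (f z - csum (fun k => z ^ k * circle_coef f r k) N = RtoC (/ (2 * PI)) * Rem)%C).
  { unfold circle_coef.
    rewrite (csum_ext _ (fun k => RtoC (/ (2 * PI))
               * (z ^ k * CInt (fun t => f (circle r t) * (/ circle r t) ^ k) 0 (2 * PI))))%C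
      by (intros; ring).
    rewrite <- csum_scal.
    replace (f z) with (RtoC (/ (2 * PI)) * (RtoC (2 * PI) * f z))%C
      by (rewrite Cmult_assoc, <- RtoC_mult, Rinv_l by lra; ring).
    rewrite <- HC. ring. }
  rewrite E, Cmod_mult, Cmod_R, Rabs_pos_eq by (left; apply Rinv_0_lt_compat; lra).
  apply Rle_trans with (/ (2 * PI) * (2 * PI * (M * (r / (r - Cmod z))) * (Cmod z / r) ^ N)).
  - apply Rmult_le_compat_l; [left; apply Rinv_0_lt_compat; lra|].
    exact (CInt_kernel_rem_bound r z Hr Hz _ N M Hphi HM).
  - right. field. lra.
Qed.

Fixpoint rsum (F : nat -> R) (N : nat) : R := match N with O => 0 | S n => rsum F n + F n end.

Lemma Cmod_csum F N : Cmod (csum F N) <= rsum (fun k => Cmod (F k)) N.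
Proof.
  induction N; simpl; [rewrite Cmod_0; lra|].
  eapply Rle_trans; [apply Cmod_triangle|lra].
Qed.

Lemma rsum_le F G N : (forall k, F k <= G k) -> rsum F N <= rsum G N.
Proof. intros H. induction N; simpl; [lra|]. generalize (H N). lra. Qed.

Lemma rsum_scal c F N : c * rsum F N = rsum (fun k => c * F k) N.
Proof. induction N; simpl; [ring|]. rewrite <- IHN. ring. Qed.

Lemma rsum_sum_f_R0 F N : rsum F (S N) = sum_f_R0 F N.
Proof. induction N; simpl; [ring|]. simpl in IHN. now rewrite IHN. Qed.

Lemma rsum_nonneg F N : (forall i, 0 <= F i) -> 0 <= rsum F N.
Proof. intros H. induction N; simpl; [lra|]. generalize (H N). lra. Qed.

Lemma rsum_ge_term F N k : (forall i, 0 <= F i) -> (k < N)%nat -> F k <= rsum F N.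
Proof.
  intros H Hk. induction N; [lia|]. simpl. destruct (Nat.eq_dec k N) as [->|].
  - generalize (rsum_nonneg F N H). lra.
  - generalize (H N) (IHN ltac:(lia)). lra.
Qed.

Lemma taylor_sum_bound h r z N b d : holomorphic h -> 0 < r -> 0 <= b -> 0 <= d ->
  (forall k, Cmod (deriv0 k h) <= d * b ^ k) ->
  Cmod (csum (fun k => z ^ k * circle_coef h r k)%C N) <= d * exp (b * Cmod z).
Proof.
  intros Hh Hr Hb Hd HD.
  eapply Rle_trans; [apply Cmod_csum|].
  apply Rle_trans with (rsum (fun k => d * ((b * Cmod z) ^ k / INR (fact k))) N).
  - apply rsum_le. intros k.
    rewrite Cmod_mult, Cmod_pow, (circle_coef_of_deriv0 h r k Hh Hr), Cmod_mult, Cmod_R,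
      Rabs_pos_eq by (left; apply Rinv_0_lt_compat, INR_fact_pos).
    rewrite Rpow_mult_distr.
    assert (0 <= Cmod z ^ k) by (apply pow_le, Cmod_ge_0).
    assert (0 < / INR (fact k)) by (apply Rinv_0_lt_compat, INR_fact_pos).
    specialize (HD k).
    replace (d * (b ^ k * Cmod z ^ k / INR (fact k)))
      with (Cmod z ^ k * ((d * b ^ k) * / INR (fact k))) by (unfold Rdiv; ring).
    apply Rmult_le_compat_l; auto. apply Rmult_le_compat_r; lra.
  - rewrite <- rsum_scal. apply Rmult_le_compat_l; auto.
    destruct N; [simpl; left; apply exp_pos|].
    rewrite rsum_sum_f_R0. apply exp_ge_taylor. apply Rmult_le_pos; [lra|apply Cmod_ge_0].
Qed.

(* Letting the degree go to infinity in the Taylor expansion on the circle of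
   radius [|z| + 1]. *)
Lemma Cmod_le_exp_of_deriv0_bound h b d : holomorphic h -> 0 <= b -> 0 <= d ->
  (forall k, Cmod (deriv0 k h) <= d * b ^ k) -> forall z, Cmod (h z) <= d * exp (b * Cmod z).
Proof.
  intros Hh Hb Hd HD z.
  set (r := Cmod z + 1).
  assert (Hzr : Cmod z < r) by (unfold r; lra).
  assert (Hr : 0 < r) by (generalize (Cmod_ge_0 z); lra).
  destruct (Rcont_bounded (fun t => h (circle r t)) 0 (2 * PI)) as [M [HM HM']].
  { generalize PI_RGT_0; lra. }
  { apply Rcont_circle_Ccont. now apply holomorphic_Ccont. }
  apply (le_of_le_geometric _ _ (M * (r / (r - Cmod z))) (Cmod z / r));
    [apply div_lt_1; generalize (Cmod_ge_0 z); lra|].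
  intros N.
  replace (h z) with ((h z - csum (fun k => z ^ k * circle_coef h r k)%C N)
                      + csum (fun k => z ^ k * circle_coef h r k)%C N)%C by ring.
  eapply Rle_trans; [apply Cmod_triangle|].
  generalize (taylor_remainder_bound h r z N M Hh Hr Hzr HM')
    (taylor_sum_bound h r z N b d Hh Hr Hb Hd HD).
  lra.
Qed.

(** * The Leibniz rule *)

Fixpoint binom (n k : nat) : nat :=
  match n, k with
  | _, O => 1%nat
  | O, S _ => 0%nat
  | S n', S k' => (binom n' k' + binom n' (S k'))%nat
  end.

Lemma binom_0 n : binom n 0 = 1%nat.
Proof. now destruct n. Qed.

Lemma binom_gt n k : (n < k)%nat -> binom n k = 0%nat.
Proof.
  revert k. induction n; intros k Hk; destruct k; try lia; auto.
  simpl. rewrite !IHn by lia. auto.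
Qed.

Lemma csum_shift F N : csum F (S N) = (F 0%nat + csum (fun k => F (S k)) N)%C.
Proof. induction N; simpl; [ring|]. simpl in IHN. rewrite IHN. ring. Qed.

Lemma csum_ext_lt F G N : (forall k, (k < N)%nat -> F k = G k) -> csum F N = csum G N.
Proof.
  intros H. induction N; simpl; auto.
  rewrite (H N) by lia. rewrite IHN; [reflexivity|]. intros k Hk. apply H. lia.
Qed.

Lemma csum_plus F G N : csum (fun k => F k + G k)%C N = (csum F N + csum G N)%C.
Proof. induction N; simpl; [ring|]. rewrite IHN. ring. Qed.

(* The common inductive step of the binomial theorem and of the Leibniz rule. *)
Lemma pascal_csum (a b : nat -> C) n :
  csum (fun k => RtoC (INR (binom n k)) * (a (S k) * b (n - k)%nat + a k * b (S (n - k))))%C (S n) =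
  csum (fun k => RtoC (INR (binom (S n) k)) * (a k * b (S n - k)%nat))%C (S (S n)).
Proof.
  rewrite (csum_shift _ (S n)), binom_0. simpl (S n - 0)%nat.
  rewrite (csum_ext (fun k => RtoC (INR (binom (S n) (S k))) * (a (S k) * b (S n - S k)%nat))%C
             (fun k => RtoC (INR (binom n k)) * (a (S k) * b (n - k)%nat)
                       + RtoC (INR (binom n (S k))) * (a (S k) * b (n - k)%nat))%C)
    by (intros k; simpl binom; rewrite plus_INR, RtoC_plus; simpl (S n - S k)%nat; ring).
  rewrite (csum_ext (fun k => RtoC (INR (binom n k)) * (a (S k) * b (n - k)%nat + a k * b (S (n - k))))%C
             (fun k => RtoC (INR (binom n k)) * (a (S k) * b (n - k)%nat)
                       + RtoC (INR (binom n k)) * (a k * b (S (n - k))))%C) by (intros; ring).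
  rewrite !csum_plus, (csum_shift (fun k => RtoC (INR (binom n k)) * (a k * b (S (n - k))))%C n),
    binom_0.
  replace (S (n - 0)) with (S n) by lia.
  assert (E : csum (fun k => RtoC (INR (binom n (S k))) * (a (S k) * b (n - k)%nat))%C (S n) =
              csum (fun k => RtoC (INR (binom n (S k))) * (a (S k) * b (S (n - S k))))%C n).
  { simpl. rewrite binom_gt by lia. simpl INR.
    rewrite (csum_ext_lt _ (fun k => RtoC (INR (binom n (S k))) * (a (S k) * b (S (n - S k))))%C n);
      [ring|].
    intros k Hk. now replace (n - k)%nat with (S (n - S k)) by lia. }
  rewrite E. simpl INR. ring.
Qed.

Lemma is_Cderive_csum (F : nat -> C -> C) (F' : nat -> C) z N :
  (forall k, is_Cderive (F k) z (F' k)) -> is_Cderive (fun w => csum (fun k => F k w) N) z (csum F' N).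
Proof.
  intros H. induction N; simpl; [apply is_Cderive_const|]. now apply is_Cderive_plus.
Qed.

Lemma Cderiv_n_mult f g n : holomorphic f -> holomorphic g -> forall z,
  Cderiv_n n (Cmul_fun f g) z =
  csum (fun k => RtoC (INR (binom n k)) * (Cderiv_n k f z * Cderiv_n (n - k) g z))%C (S n).
Proof.
  intros Hf Hg. induction n; intros z; [simpl; unfold Cmul_fun; ring|].
  change (Cderiv_n (S n) (Cmul_fun f g) z) with (Cderiv (Cderiv_n n (Cmul_fun f g)) z).
  rewrite (functional_extensionality _ _ IHn). apply Cderiv_unique.
  rewrite <- (pascal_csum (fun k => Cderiv_n k f z) (fun j => Cderiv_n j g z)).
  apply is_Cderive_csum. intros k. apply is_Cderive_scal.
  apply is_Cderive_mult; now apply is_Cderive_Cderiv_n.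
Qed.


Lemma binomial_C (x y : C) n :
  ((x + y) ^ n = csum (fun k => RtoC (INR (binom n k)) * (x ^ k * y ^ (n - k)%nat)) (S n))%C.
Proof.
  induction n; [simpl; ring|].
  rewrite <- (pascal_csum (fun k => x ^ k)%C (fun j => y ^ j)%C).
  simpl Cpow at 1. rewrite IHn, csum_scal. apply csum_ext. intros k. simpl. ring.
Qed.

Lemma RtoC_rsum F N : RtoC (rsum F N) = csum (fun k => RtoC (F k)) N.
Proof. induction N; simpl; auto. now rewrite RtoC_plus, IHN. Qed.

Lemma binomial_R (x y : R) n :
  (x + y) ^ n = rsum (fun k => INR (binom n k) * (x ^ k * y ^ (n - k)%nat)) (S n).
Proof.
  apply RtoC_inj. rewrite RtoC_rsum, RtoC_pow, RtoC_plus, binomial_C.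
  apply csum_ext. intros k. now rewrite !RtoC_mult, !RtoC_pow.
Qed.

(** * The spaces [A_a] *)

Lemma normb_le b f (M : R) : (forall k, Cmod (deriv0 k f) / b ^ k <= M) -> Rbar_le (normb b f) M.
Proof.
  intros H. unfold normb.
  destruct (Lub_Rbar_correct (fun x => exists k, x = Cmod (Cderiv_n k f (0%R, 0%R)) / b ^ k))
    as [_ H2].
  apply H2. intros x [k ->]. apply H.
Qed.

Lemma normb_lt b f (M eps : R) : (forall k, Cmod (deriv0 k f) / b ^ k <= M) -> M < eps ->
  Rbar_lt (normb b f) eps.
Proof. intros H HM. eapply Rbar_le_lt_trans; [apply normb_le, H|exact HM]. Qed.

Lemma normb_ge_term b f k : Rbar_le (Cmod (deriv0 k f) / b ^ k) (normb b f).
Proof.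
  unfold normb.
  destruct (Lub_Rbar_correct (fun x => exists k, x = Cmod (Cderiv_n k f (0%R, 0%R)) / b ^ k))
    as [H1 _].
  apply H1. now exists k.
Qed.

Lemma normb_le_bound b f (M : Rbar) : Rbar_le (normb b f) M ->
  forall k, Rbar_le (Cmod (deriv0 k f) / b ^ k) M.
Proof. intros H k. exact (Rbar_le_trans _ _ _ (normb_ge_term b f k) H). Qed.

Lemma normb_finite b f : Rbar_lt (normb b f) p_infty ->
  exists M, forall k, Cmod (deriv0 k f) / b ^ k <= M.
Proof.
  intros H. destruct (normb b f) as [M| |] eqn:E; simpl in H; try contradiction.
  - exists M. apply (normb_le_bound b f M). rewrite E. apply Rbar_le_refl.
  - generalize (normb_ge_term b f 0). now rewrite E.
Qed.

Lemma le_mult_of_div_le x y M : 0 < y -> x / y <= M -> x <= M * y.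
Proof.
  intros Hy H. apply (Rmult_le_compat_r y) in H; [|lra].
  unfold Rdiv in H. now rewrite Rmult_assoc, Rinv_l, Rmult_1_r in H by lra.
Qed.

Lemma div_le_of_le_mult x y M : 0 < y -> x <= M * y -> x / y <= M.
Proof.
  intros Hy H. apply (Rmult_le_reg_r y); auto.
  unfold Rdiv. rewrite Rmult_assoc, Rinv_l, Rmult_1_r; lra.
Qed.

Lemma A_space_holomorphic a f : A_space a f -> holomorphic f.
Proof. intros [H _]. now apply entire_holomorphic. Qed.

Lemma A_space_deriv0_bound a f b : A_space a f -> a < b -> 0 < b ->
  exists M, 0 <= M /\ forall k, Cmod (deriv0 k f) <= M * b ^ k.
Proof.
  intros [_ H] Hab Hb. destruct (normb_finite b f (H b Hab)) as [M HM].
  exists M. split.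
  - generalize (HM 0%nat) (Cmod_ge_0 (deriv0 0 f)). simpl. rewrite Rdiv_1_r. lra.
  - intros k. apply le_mult_of_div_le; auto. now apply pow_lt.
Qed.

(* [u k <= M b'^k] gives [u k / b^k <= M (b'/b)^k], uniformly in [u]. *)
Lemma eventually_div_pow_le M b' b eps : 0 < b' < b -> 0 < eps ->
  exists N, forall u : nat -> R, (forall k, u k <= M * b' ^ k) ->
    forall k, (N <= k)%nat -> u k / b ^ k <= eps.
Proof.
  intros Hb He. set (q := b' / b).
  assert (Hq : 0 <= q < 1) by (apply div_lt_1; lra).
  set (M' := Rabs M + 1).
  destruct (pow_lt_1_zero q ltac:(rewrite Rabs_pos_eq; lra) (eps / M')) as [N HN].
  { apply Rdiv_lt_0_compat; [lra|]. unfold M'. generalize (Rabs_pos M). lra. }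
  exists N. intros u Hu k Hk. specialize (HN k Hk).
  rewrite Rabs_pos_eq in HN by (apply pow_le; lra).
  assert (Hbk : 0 < b ^ k) by (apply pow_lt; lra).
  apply div_le_of_le_mult; auto.
  assert (Eq : b' ^ k = q ^ k * b ^ k) by (unfold q; rewrite <- Rpow_mult_distr; f_equal; field; lra).
  assert (0 <= q ^ k) by (apply pow_le; lra).
  assert (HM : M * q ^ k <= eps).
  { apply (Rmult_lt_compat_l M') in HN; [|unfold M'; generalize (Rabs_pos M); lra].
    replace (M' * (eps / M')) with eps in HN by (unfold M'; field; generalize (Rabs_pos M); lra).
    apply Rle_trans with (M' * q ^ k); [|lra].
    apply Rmult_le_compat_r; auto. unfold M'. generalize (Rle_abs M). lra. }
  eapply Rle_trans; [apply Hu|]. rewrite Eq. nra.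
Qed.

Lemma sup_disc_lt_bound r h (d : R) : Rbar_lt (sup_disc r h) d -> forall z, Cmod z <= r -> Cmod (h z) < d.
Proof.
  intros H z Hz. unfold sup_disc in H.
  destruct (Lub_Rbar_correct (fun x => exists z, Cmod z <= r /\ x = Cmod (h z))) as [H1 _].
  assert (H2 := H1 (Cmod (h z)) (ex_intro _ z (conj Hz eq_refl))).
  exact (Rbar_le_lt_trans _ _ _ H2 H).
Qed.

Lemma sup_disc_le r h (K : R) : (forall z, Cmod z <= r -> Cmod (h z) <= K) -> Rbar_le (sup_disc r h) K.
Proof.
  intros H. unfold sup_disc.
  destruct (Lub_Rbar_correct (fun x => exists z, Cmod z <= r /\ x = Cmod (h z))) as [_ H2].
  apply H2. intros x [z [Hz ->]]. now apply H.
Qed.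

(** ** Density of polynomials *)

Definition polyc (c : nat -> C) N (z : C) : C := csum (fun j => c j * z ^ j)%C N.

Lemma holomorphic_polyc c N : holomorphic (polyc c N).
Proof.
  intros z. eexists. apply is_Cderive_csum. intros k. apply is_Cderive_scal, is_Cderive_pow.
Qed.

Lemma sum_n_csum (F : nat -> C) N : sum_n F N = csum F (S N).
Proof.
  induction N; [rewrite sum_O; simpl; ring|].
  rewrite sum_Sn, IHN. reflexivity.
Qed.

Lemma is_polynomial_polyc c N : is_polynomial (polyc c (S N)).
Proof.
  exists N, c. intros z. unfold polyc. now rewrite sum_n_csum.
Qed.

Lemma circle_coef_monomial r j k : 0 < r ->
  circle_coef (fun z => z ^ j)%C r k = if Nat.eqb j k then RtoC 1 else RtoC 0.
Proof.
  intros Hr. unfold circle_coef. assert (HPI : 0 < PI) by apply PI_RGT_0.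
  assert (Hunit : forall t, (circle r t * / circle r t)%C = RtoC 1)
    by (intros t; field; now apply circle_neq0).
  destruct (Nat.eqb_spec j k) as [->|E].
  - rewrite (CInt_ext _ (fun _ => RtoC 1)), CInt_const.
    + rewrite <- !RtoC_mult. f_equal. field. lra.
    + intros t _. now rewrite <- Cpow_mult_l, Hunit, Cpow_1_l.
  - destruct (Compare_dec.lt_dec k j) as [L|L].
    + rewrite (CInt_ext _ (fun t => (circle r t) ^ (j - k))%C).
      * rewrite CInt_circle_pow by (auto; lia). ring.
      * intros t _. replace j with (k + (j - k))%nat at 1 by lia.
        rewrite Cpow_add_r, (Cmult_comm (circle r t ^ k)), <- Cmult_assoc, <- Cpow_mult_l,
          Hunit, Cpow_1_l. ring.
    + rewrite (CInt_ext _ (fun t => (/ circle r t) ^ (k - j))%C).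
      * rewrite CInt_circle_inv_pow by (auto; lia). ring.
      * intros t _. replace k with (j + (k - j))%nat at 1 by lia.
        rewrite Cpow_add_r, Cmult_assoc, <- Cpow_mult_l, Hunit, Cpow_1_l. ring.
Qed.

Lemma circle_coef_polyc c N r k : 0 < r ->
  circle_coef (polyc c N) r k = if Nat.ltb k N then c k else RtoC 0.
Proof.
  intros Hr.
  assert (Hmon : forall j, Rcont (fun t => circle r t ^ j * (/ circle r t) ^ k)%C)
    by (intros j; apply Rcont_mult; apply Rcont_pow; auto using Rcont_circle, Rcont_circle_inv).
  transitivity (csum (fun j => c j * circle_coef (fun z => z ^ j) r k)%C N).
  - unfold circle_coef, polyc.
    rewrite (CInt_ext _ (fun t => csum (fun j => c j * (circle r t ^ j * (/ circle r t) ^ k)) N)%C).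
    2:{ intros t _. rewrite Cmult_comm, csum_scal. apply csum_ext. intros j. ring. }
    rewrite CInt_csum by (intros j; apply Rcont_mult; auto using Rcont_const).
    rewrite csum_scal. apply csum_ext. intros j. rewrite CInt_scal by auto. ring.
  - rewrite (csum_ext _ (fun j => c j * (if Nat.eqb j k then RtoC 1 else RtoC 0))%C)
      by (intros j; now rewrite circle_coef_monomial).
    induction N; simpl; [auto|]. rewrite IHN.
    destruct (Nat.eqb_spec N k), (Nat.ltb_spec k N), (Nat.ltb_spec k (S N));
      try lia; try subst; ring.
Qed.

Definition taylor_coef (f : C -> C) (k : nat) : C := (deriv0 k f * RtoC (/ INR (fact k)))%C.

Lemma deriv0_taylor_poly f N k :
  deriv0 k (polyc (taylor_coef f) N) = if Nat.ltb k N then deriv0 k f else RtoC 0.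
Proof.
  rewrite (deriv0_circle_coef _ 1), circle_coef_polyc by (auto using holomorphic_polyc; lra).
  destruct (Nat.ltb k N); [|ring].
  unfold taylor_coef.
  replace (RtoC (INR (fact k)) * (deriv0 k f * RtoC (/ INR (fact k))))%C
    with (deriv0 k f * RtoC (INR (fact k) * / INR (fact k)))%C by (rewrite RtoC_mult; ring).
  rewrite Rinv_r by (generalize (INR_fact_pos k); lra). ring.
Qed.

Lemma A_space_tail a f b eps : 0 <= a -> A_space a f -> a < b -> 0 < eps ->
  exists N, forall k, (N <= k)%nat -> Cmod (deriv0 k f) / b ^ k <= eps.
Proof.
  intros Ha Hf Hab He.
  destruct (A_space_deriv0_bound a f ((a + b) / 2) Hf) as [M [_ HM]]; try lra.
  destruct (eventually_div_pow_le M ((a + b) / 2) b eps) as [N HN]; try lra.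
  exists N. now apply (HN (fun k => Cmod (deriv0 k f))).
Qed.

Lemma normb_taylor_poly_sub a f b N eps : A_space a f -> 0 < b ->
  (forall k, (N <= k)%nat -> Cmod (deriv0 k f) / b ^ k <= eps / 2) -> 0 < eps ->
  Rbar_lt (normb b (Csub_fun (polyc (taylor_coef f) N) f)) eps.
Proof.
  intros Hf Hb HN He. apply (normb_lt _ _ (eps / 2)); [|lra]. intros k.
  rewrite deriv0_minus, deriv0_taylor_poly by eauto using A_space_holomorphic, holomorphic_polyc.
  destruct (Nat.ltb_spec k N).
  - replace (deriv0 k f - deriv0 k f)%C with (RtoC 0) by ring. rewrite Cmod_0, Rdiv_0_l. lra.
  - replace (RtoC 0 - deriv0 k f)%C with (- deriv0 k f)%C by ring.
    rewrite Cmod_opp. auto.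
Qed.

Lemma A_space_polynomial_dense a f bs eps : 0 <= a -> A_space a f ->
  List.Forall (fun b => a < b) bs -> 0 < eps ->
  exists p : C -> C, is_polynomial p /\ Ta_close bs eps f p.
Proof.
  intros Ha Hf Hbs He.
  assert (HN : exists N, List.Forall (fun b =>
             forall k, (N <= k)%nat -> Cmod (deriv0 k f) / b ^ k <= eps / 2) bs).
  { induction Hbs as [|b bs Hb Hbs IH]; [exists 0%nat; constructor|].
    destruct IH as [N1 H1]. destruct (A_space_tail a f b (eps / 2)) as [N2 H2]; auto; [lra|].
    exists (Nat.max N1 N2). constructor.
    - intros k Hk. apply H2. lia.
    - eapply List.Forall_impl; [|apply H1]. intros b' Hb' k Hk. apply Hb'. lia. }
  destruct HN as [N HN].
  exists (polyc (taylor_coef f) (S N)). split; [apply is_polynomial_polyc|].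
  eapply List.Forall_impl; [|apply (List.Forall_and Hbs HN)]. intros b [Hab Hb].
  apply (normb_taylor_poly_sub a); auto; [lra|]. intros k Hk. apply Hb. lia.
Qed.

(** ** Bounded sets *)

Lemma bounded_in_A_tail a B b eps : 0 <= a -> bounded_in_A a B -> a < b -> 0 < eps ->
  exists N, forall g, B g -> forall k, (N <= k)%nat -> Cmod (deriv0 k g) / b ^ k <= eps.
Proof.
  intros Ha [_ HB] Hab He.
  set (b' := (a + b) / 2). destruct (HB b' ltac:(unfold b'; lra)) as [Cb HCb].
  destruct (eventually_div_pow_le Cb b' b eps) as [N HN]; [unfold b'; lra|auto|].
  exists N. intros g Hg. apply (HN (fun k => Cmod (deriv0 k g))). intros k.
  apply le_mult_of_div_le; [apply pow_lt; unfold b'; lra|].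
  exact (normb_le_bound b' g Cb (HCb g Hg) k).
Qed.

(* Beyond the uniform tail index [N] the coefficients are small for the whole
   bounded set; below it, Cauchy estimates on the unit circle apply. *)
Lemma Ta_close_of_unit_circle_close a B f b eps : 0 <= a -> bounded_in_A a B -> B f ->
  a < b -> 0 < eps ->
  exists d, 0 < d /\ forall g, B g -> (forall t, Cmod (Csub_fun g f (circle 1 t)) <= d) ->
    Rbar_lt (normb b (Csub_fun g f)) eps.
Proof.
  intros Ha HB Hf Hab He.
  destruct (bounded_in_A_tail a B b (eps / 4) Ha HB Hab ltac:(lra)) as [N HN].
  assert (Hterm : forall i, 0 <= INR (fact i) / b ^ i)
    by (intros i; left; apply Rdiv_lt_0_compat; [apply INR_fact_pos|apply pow_lt; lra]).
  set (S := rsum (fun k => INR (fact k) / b ^ k) N).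
  assert (HS : 0 <= S) by now apply rsum_nonneg.
  set (d := eps / (2 * (S + 1))). assert (Hd : 0 < d) by (apply Rdiv_lt_0_compat; lra).
  exists d. split; auto. intros g Hg Hgf.
  destruct HB as [HBA _].
  assert (Hfh := A_space_holomorphic a f (HBA f Hf)).
  assert (Hgh := A_space_holomorphic a g (HBA g Hg)).
  apply (normb_lt _ _ (eps / 2)); [|lra]. intros k.
  assert (Hbk : 0 < b ^ k) by (apply pow_lt; lra).
  destruct (Compare_dec.lt_dec k N) as [L|L].
  - generalize (cauchy_estimate (Csub_fun g f) 1 k d (holomorphic_minus f g Hfh Hgh) Rlt_0_1 Hgf).
    rewrite pow1, Rdiv_1_r. intros H.
    assert (INR (fact k) / b ^ k <= S) by now apply (rsum_ge_term (fun k => INR (fact k) / b ^ k)).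
    apply Rle_trans with (INR (fact k) / b ^ k * d).
    + apply div_le_of_le_mult; auto. eapply Rle_trans; [apply H|right; field; lra].
    + apply Rle_trans with ((S + 1) * d); [apply Rmult_le_compat_r; lra|].
      right. unfold d. field. lra.
  - rewrite deriv0_minus by auto. apply div_le_of_le_mult; auto.
    eapply Rle_trans; [apply Cmod_triangle_minus|].
    generalize (HN g Hg k ltac:(lia)) (HN f Hf k ltac:(lia)); intros H1 H2.
    apply le_mult_of_div_le in H1, H2; auto. lra.
Qed.

Lemma Ta_close_of_cc_close a B f bs eps : 0 <= a -> bounded_in_A a B -> B f ->
  List.Forall (fun b => a < b) bs -> 0 < eps ->
  exists r delta : R, 0 <= r /\ 0 < delta /\ forall g, B g -> cc_close r delta f g -> Ta_close bs eps f g.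
Proof.
  intros Ha HB Hf Hbs He.
  assert (H : exists d, 0 < d /\ forall g, B g ->
                (forall t, Cmod (Csub_fun g f (circle 1 t)) <= d) -> Ta_close bs eps f g).
  { induction Hbs as [|b bs Hb Hbs IH]; [exists 1; split; [lra|constructor]|].
    destruct IH as [d1 [Hd1 H1]].
    destruct (Ta_close_of_unit_circle_close a B f b eps Ha HB Hf Hb He) as [d2 [Hd2 H2]].
    exists (Rmin d1 d2). split; [now apply Rmin_pos|].
    intros g Hg Hc. constructor.
    - apply H2; auto. intros t. eapply Rle_trans; [apply Hc|apply Rmin_r].
    - apply H1; auto. intros t. eapply Rle_trans; [apply Hc|apply Rmin_l]. }
  destruct H as [d [Hd H]]. exists 1, d. repeat split; [lra|auto|].
  intros g Hg Hc. apply H; auto. intros t. left.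
  apply (sup_disc_lt_bound 1 _ d Hc). rewrite Cmod_circle; lra.
Qed.

Lemma cc_close_of_Ta_close a f r eps : 0 <= a -> A_space a f -> 0 <= r -> 0 < eps ->
  exists (bs : list R) (delta : R), List.Forall (fun b => a < b) bs /\ 0 < delta /\
    forall g, A_space a g -> Ta_close bs delta f g -> cc_close r eps f g.
Proof.
  intros Ha Hf Hr He.
  set (b := a + 1). set (d := eps / (2 * exp (b * r))).
  assert (Hexp : 0 < exp (b * r)) by apply exp_pos.
  assert (Hd : 0 < d) by (apply Rdiv_lt_0_compat; lra).
  exists (List.cons b List.nil), d.
  split; [constructor; [unfold b; lra|constructor]|]. split; auto.
  intros g Hg HT. apply List.Forall_inv in HT.
  assert (Hh : holomorphic (Csub_fun g f))
    by (apply holomorphic_minus; eapply A_space_holomorphic; eauto).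
  unfold cc_close. apply Rbar_le_lt_trans with (Finite (eps / 2)); [|simpl; lra].
  apply sup_disc_le. intros z Hz.
  eapply Rle_trans.
  - apply (Cmod_le_exp_of_deriv0_bound _ b d); auto; [unfold b; lra|lra|].
    intros k. apply le_mult_of_div_le; [apply pow_lt; unfold b; lra|].
    apply (normb_le_bound b _ d). destruct (normb b (Csub_fun g f)); simpl in *; auto; lra.
  - apply Rle_trans with (d * exp (b * r)); [|right; unfold d; field; lra].
    apply Rmult_le_compat_l; [lra|].
    assert (b * Cmod z <= b * r) by (apply Rmult_le_compat_l; [unfold b; lra|auto]).
    destruct (Req_dec (b * Cmod z) (b * r)) as [->|E]; [lra|].
    left. apply exp_increasing. lra.
Qed.

(** ** Products *)

Lemma A_space_mult a b f g : 0 <= a -> 0 <= b -> A_space a f -> A_space b g ->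
  A_space (a + b) (Cmul_fun f g).
Proof.
  intros Ha Hb Hf Hg.
  assert (Hfh := A_space_holomorphic a f Hf). assert (Hgh := A_space_holomorphic b g Hg).
  split; [apply entire_holomorphic; now apply holomorphic_mult|].
  intros c Hc. set (s := (c - a - b) / 2).
  destruct (A_space_deriv0_bound a f (a + s) Hf) as [M1 [HM1 H1]]; try (unfold s; lra).
  destruct (A_space_deriv0_bound b g (b + s) Hg) as [M2 [HM2 H2]]; try (unfold s; lra).
  apply Rbar_le_lt_trans with (Finite (M1 * M2)); [|simpl; auto].
  apply normb_le. intros n. apply div_le_of_le_mult; [apply pow_lt; lra|].
  unfold deriv0. rewrite Cderiv_n_mult by auto.
  eapply Rle_trans; [apply Cmod_csum|].
  replace c with ((a + s) + (b + s)) by (unfold s; field).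
  rewrite binomial_R, rsum_scal. apply rsum_le. intros k.
  rewrite !Cmod_mult, Cmod_R, Rabs_pos_eq by apply pos_INR.
  specialize (H1 k). specialize (H2 (n - k)%nat). unfold deriv0 in H1, H2.
  replace (M1 * M2 * (INR (binom n k) * ((a + s) ^ k * (b + s) ^ (n - k))))
    with (INR (binom n k) * ((M1 * (a + s) ^ k) * (M2 * (b + s) ^ (n - k)))) by ring.
  apply Rmult_le_compat_l; [apply pos_INR|].
  apply Rmult_le_compat; auto using Cmod_ge_0.
Qed.

Theorem theorem1p1 : forall a : R, 0 <= a ->
  (* (i) polynomials are dense in A_a *)
  (forall f : C -> C, A_space a f ->
     forall (bs : list R) (eps : R), List.Forall (fun b => a < b) bs -> 0 < eps ->
       exists p : C -> C, is_polynomial p /\ Ta_close bs eps f p)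
  /\
  (* (ii) on bounded sets, T_a and compact convergence induce the same topology *)
  (forall B : (C -> C) -> Prop, bounded_in_A a B ->
     forall f : C -> C, B f ->
       (forall (bs : list R) (eps : R), List.Forall (fun b => a < b) bs -> 0 < eps ->
          exists r delta : R, 0 <= r /\ 0 < delta /\
            forall g, B g -> cc_close r delta f g -> Ta_close bs eps f g)
       /\
       (forall r eps : R, 0 <= r -> 0 < eps ->
          exists (bs : list R) (delta : R), List.Forall (fun b => a < b) bs /\ 0 < delta /\
            forall g, B g -> Ta_close bs delta f g -> cc_close r eps f g))
  /\
  (* (iii) A_a * A_b is contained in A_(a+b) *)
  (forall (b : R) (f g : C -> C), 0 <= b -> A_space a f -> A_space b g ->
     A_space (a + b) (Cmul_fun f g)).
Proof.
  intros a Ha. split; [|split].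
  - intros f Hf bs eps Hbs He. now apply (A_space_polynomial_dense a).
  - intros B HB f Hf. split.
    + intros bs eps Hbs He. now apply (Ta_close_of_cc_close a B).
    + intros r eps Hr He. destruct HB as [HBA HBb].
      destruct (cc_close_of_Ta_close a f r eps Ha (HBA f Hf) Hr He) as [bs [delta [Hbs [Hd H]]]].
      exists bs, delta. repeat split; auto.
  - intros b f g Hb Hf Hg. now apply A_space_mult.
Qed.
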